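(* Suppose that the natural action of $G$ on $\mathcal M(S_G(M))$ makes it a definable $G$-flow, and that $G$ is definably strongly amenable. Then $G$ is definably amenable.
   Context: $M$ is a first-order structure, $G$ a group definable in $M$, and all types in $S_G(M)$ are definable (for each $p$ and formula $\varphi(x,y)$, $\{m:\varphi(x,m)\in p\}$ is definable). $\mathcal M(S_G(M))$ is the space of Keisler measures (finitely additive probability measures on the Boolean algebra $B_G(M)$ of $M$-definable subsets of $G$), a closed subset of $[0,1]^{B_G(M)}$ with the product topology, with $G$ acting by $(g\mu)(X)=\mu(g^{-1}X)$. A map $f:G\to C$ to a compact Hausdorff space is definable if for any disjoint closed $C_1,C_2$ the preimages are separated by a definable subset of $G$. A $G$-flow (action by homeomorphisms on a compact Hausdorff space) is definable if each orbit map $g\mapsto gx$ is definable; minimal if no proper nonempty closed invariant subset; proximal if for all $x,y$ there is a net $(g_i)$ with $\lim g_ix=\lim g_iy$. $G$ is definably strongly amenable if every minimal definable proximal $G$-flow is a single point, and definably amenable if there is a $G$-invariant Keisler measure on $G$ over $M$. *)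

From Stdlib Require Import Reals List.
Import ListNotations.
Set Implicit Arguments.
Unset Strict Implicit.

(* First-order structures.  Symbols are interpreted on finite lists; a *)
(* symbol applied to a list of length n acts as an n-ary symbol (i.e.  *)
(* each symbol is a family of symbols, one for each arity).            *)
Record structure := {
  carrier :> Type;
  fsym : Type;
  rsym : Type;
  fint : fsym -> list carrier -> carrier;
  rint : rsym -> list carrier -> Prop }.

Inductive term (F : Type) : Type :=
| tvar : nat -> term F
| tapp : F -> list (term F) -> term F.
Arguments tvar {F} _.
Arguments tapp {F} _ _.

Inductive formula (F R : Type) : Type :=
| fatom : R -> list (term F) -> formula F R
| feq : term F -> term F -> formula F R
| fneg : formula F R -> formula F R
| fand : formula F R -> formula F R -> formula F R
| fex : nat -> formula F R -> formula F R.
Arguments fatom {F R} _ _.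
Arguments feq {F R} _ _.
Arguments fneg {F R} _.
Arguments fand {F R} _ _.
Arguments fex {F R} _ _.

Fixpoint teval (M : structure) (e : nat -> M) (t : term (fsym M)) : carrier M :=
  match t with
  | tvar i => e i
  | tapp f ts => fint f (map (teval e) ts)
  end.

Definition upd (M : structure) (e : nat -> M) (i : nat) (a : M) : nat -> M :=
  fun j => if Nat.eqb j i then a else e j.

Fixpoint sat (M : structure) (e : nat -> M) (phi : formula (fsym M) (rsym M)) : Prop :=
  match phi with
  | fatom r ts => rint r (map (teval e) ts)
  | feq t1 t2 => teval e t1 = teval e t2
  | fneg p => ~ sat e p
  | fand p q => sat e p /\ sat e q
  | fex i p => exists a : M, sat (upd e i a) p
  end.

(* variables 0..length l - 1 are assigned l, the others take parameters from e *)
Definition env_app (M : structure) (l : list M) (e : nat -> M) : nat -> M :=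
  fun i => match nth_error l i with Some a => a | None => e i end.

Definition definable (M : structure) (n : nat) (P : list M -> Prop) : Prop :=
  exists (phi : formula (fsym M) (rsym M)) (e : nat -> M),
    forall l : list M, length l = n -> (P l <-> sat (env_app l e) phi).

Definition def_group (M : structure) (k : nat) (G : list M -> Prop)
  (mul : list M -> list M -> list M) (inv : list M -> list M) (one : list M) : Prop :=
  (forall g, G g -> length g = k) /\
  definable k G /\
  definable (k + k + k)
    (fun l => G (firstn k l) /\ G (firstn k (skipn k l)) /\
              skipn (k + k) l = mul (firstn k l) (firstn k (skipn k l))) /\
  G one /\
  (forall g h, G g -> G h -> G (mul g h)) /\
  (forall g, G g -> G (inv g)) /\
  (forall g h l, G g -> G h -> G l -> mul (mul g h) l = mul g (mul h l)) /\
  (forall g, G g -> mul one g = g /\ mul g one = g) /\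
  (forall g, G g -> mul (inv g) g = one /\ mul g (inv g) = one).

Definition inB (M : structure) (k : nat) (G : list M -> Prop) (X : list M -> Prop) : Prop :=
  definable k X /\ (forall g, X g -> G g).

(* complete types over M concentrating on G: ultrafilters of B_G(M),
   i.e. Boolean algebra homomorphisms B_G(M) -> 2 (values off B_G(M) irrelevant) *)
Definition is_type (M : structure) (k : nat) (G : list M -> Prop)
  (p : (list M -> Prop) -> Prop) : Prop :=
  p G /\
  (forall X Y, inB k G X -> inB k G Y -> (p (fun g => X g /\ Y g) <-> p X /\ p Y)) /\
  (forall X, inB k G X -> (p (fun g => G g /\ ~ X g) <-> ~ p X)).

Definition definable_type (M : structure) (k : nat) (G : list M -> Prop)
  (p : (list M -> Prop) -> Prop) : Prop :=
  forall (m : nat) (D : list M -> Prop), definable (k + m) D ->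
    definable m (fun b => p (fun a => G a /\ D (a ++ b))).

(* Keisler measures: finitely additive probability measures on B_G(M)
   (values off B_G(M) irrelevant) *)
Definition keisler (M : structure) (k : nat) (G : list M -> Prop)
  (mu : (list M -> Prop) -> R) : Prop :=
  (forall X, inB k G X -> (0 <= mu X <= 1)%R) /\
  mu G = 1%R /\
  (forall X Y, inB k G X -> inB k G Y -> (forall g, X g -> Y g -> False) ->
     mu (fun g => X g \/ Y g) = (mu X + mu Y)%R).

(* (g mu)(X) = mu(g^{-1} X) *)
Definition mtrans (M : structure) (G : list M -> Prop) (mul : list M -> list M -> list M)
  (g : list M) (mu : (list M -> Prop) -> R) : (list M -> Prop) -> R :=
  fun X => mu (fun h => G h /\ X (mul g h)).

(* open sets of the product topology of R^{B_G(M)} (coordinates indexed by B_G(M)) *)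
Definition prod_open (M : structure) (k : nat) (G : list M -> Prop)
  (U : ((list M -> Prop) -> R) -> Prop) : Prop :=
  forall mu, U mu -> exists (Xs : list (list M -> Prop)) (eps : R),
    (0 < eps)%R /\ (forall X, In X Xs -> inB k G X) /\
    forall nu, (forall X, In X Xs -> (Rabs (nu X - mu X) < eps)%R) -> U nu.

Definition prod_closed (M : structure) (k : nat) (G : list M -> Prop)
  (C : ((list M -> Prop) -> R) -> Prop) : Prop :=
  prod_open k G (fun mu => ~ C mu).

(* Closed subsets of the
   subspace of Keisler measures are traces of closed subsets of the product. *)
Definition measure_flow_definable (M : structure) (k : nat) (G : list M -> Prop)
  (mul : list M -> list M -> list M) : Prop :=
  forall mu, keisler k G mu ->
  forall C1 C2, prod_closed k G C1 -> prod_closed k G C2 ->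
    (forall nu, keisler k G nu -> C1 nu -> C2 nu -> False) ->
    exists D, definable k D /\
      forall g, G g ->
        (C1 (mtrans G mul g mu) -> D g) /\ (C2 (mtrans G mul g mu) -> ~ D g).

Record topology (X : Type) := {
  is_open : (X -> Prop) -> Prop;
  open_full : is_open (fun _ => True);
  open_inter : forall U V, is_open U -> is_open V -> is_open (fun x => U x /\ V x);
  open_union : forall F : (X -> Prop) -> Prop, (forall U, F U -> is_open U) ->
      is_open (fun x => exists U, F U /\ U x) }.

Definition is_closed (X : Type) (T : topology X) (C : X -> Prop) : Prop :=
  is_open T (fun x => ~ C x).

Definition compact (X : Type) (T : topology X) : Prop :=
  forall F : (X -> Prop) -> Prop, (forall U, F U -> is_open T U) ->
    (forall x, exists U, F U /\ U x) ->
    exists Us : list (X -> Prop), (forall U, In U Us -> F U) /\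
      (forall x, exists U, In U Us /\ U x).

Definition hausdorff (X : Type) (T : topology X) : Prop :=
  forall x y : X, x <> y -> exists U V, is_open T U /\ is_open T V /\ U x /\ V y /\
    (forall z, U z -> V z -> False).

Definition continuous (X : Type) (T : topology X) (f : X -> X) : Prop :=
  forall U, is_open T U -> is_open T (fun x => U (f x)).

Definition directed (I : Type) (le : I -> I -> Prop) : Prop :=
  (exists i : I, True) /\ (forall i, le i i) /\
  (forall i j l, le i j -> le j l -> le i l) /\
  (forall i j, exists l, le i l /\ le j l).

Definition net_converges (X : Type) (T : topology X) (I : Type) (le : I -> I -> Prop)
  (x : I -> X) (z : X) : Prop :=
  forall U, is_open T U -> U z -> exists i0, forall i, le i0 i -> U (x i).

Definition is_flow (M : structure) (G : list M -> Prop) (mul : list M -> list M -> list M)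
  (one : list M) (X : Type) (T : topology X) (act : list M -> X -> X) : Prop :=
  (exists x : X, True) /\ compact T /\ hausdorff T /\
  (forall g, G g -> continuous T (act g)) /\
  (forall x, act one x = x) /\
  (forall g h x, G g -> G h -> act (mul g h) x = act g (act h x)).

Definition definable_map (M : structure) (k : nat) (G : list M -> Prop)
  (X : Type) (T : topology X) (f : list M -> X) : Prop :=
  forall C1 C2, is_closed T C1 -> is_closed T C2 -> (forall x, C1 x -> C2 x -> False) ->
    exists D, definable k D /\
      forall g, G g -> (C1 (f g) -> D g) /\ (C2 (f g) -> ~ D g).

Definition definable_flow (M : structure) (k : nat) (G : list M -> Prop)
  (X : Type) (T : topology X) (act : list M -> X -> X) : Prop :=
  forall x : X, definable_map k G T (fun g => act g x).

Definition minimal_flow (M : structure) (G : list M -> Prop)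
  (X : Type) (T : topology X) (act : list M -> X -> X) : Prop :=
  forall Y : X -> Prop, is_closed T Y -> (exists y, Y y) ->
    (forall g y, G g -> Y y -> Y (act g y)) -> forall x, Y x.

Definition proximal_flow (M : structure) (G : list M -> Prop)
  (X : Type) (T : topology X) (act : list M -> X -> X) : Prop :=
  forall x y : X, exists (I : Type) (le : I -> I -> Prop) (gs : I -> list M) (z : X),
    directed le /\ (forall i, G (gs i)) /\
    net_converges T le (fun i => act (gs i) x) z /\
    net_converges T le (fun i => act (gs i) y) z.

Definition def_strongly_amenable (M : structure) (k : nat) (G : list M -> Prop)
  (mul : list M -> list M -> list M) (one : list M) : Prop :=
  forall (X : Type) (T : topology X) (act : list M -> X -> X),
    is_flow G mul one T act -> definable_flow k G T act ->
    minimal_flow G T act -> proximal_flow G T act ->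
    forall x y : X, x = y.

Definition def_amenable (M : structure) (k : nat) (G : list M -> Prop)
  (mul : list M -> list M -> list M) : Prop :=
  exists mu, keisler k G mu /\
    forall g X, G g -> inB k G X -> mtrans G mul g mu X = mu X.

(* Let K be a minimal nonempty closed convex G-invariant set of Keisler measures (Zorn and
   compactness of [0,1]^{B_G(M)}), and e an extreme point of K (a minimal closed face is a point).
   Minimality makes K the closed convex hull of each of its orbit closures, and extremality then
   puts e in every orbit closure in K; applied to midpoints, it even drags any two points of K
   simultaneously towards e. So a minimal closed invariant Y in K contains e and is a minimal
   proximal flow, definable because its orbit maps are those of the measure flow. By strong
   amenability Y is a point, so e is a G-invariant Keisler measure. *)

From Pilot Require Import Defs.
From Stdlib Require Import Reals List Lra Lia.
From Stdlib Require Import Classical ClassicalEpsilon FunctionalExtensionality PropExtensionality ProofIrrelevance.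
From mathcomp Require classical_sets.
Import ListNotations.

Section Definability.
Variable M : structure.
Notation Fs := (fsym M).
Notation Rs := (rsym M).

Fixpoint term_nested_ind (P : term Fs -> Prop) (Hvar : forall i, P (tvar i))
  (Happ : forall f ts, Forall P ts -> P (tapp f ts)) (t : term Fs) : P t :=
  match t with
  | tvar i => Hvar i
  | tapp f ts => Happ f ts ((fix go (l : list (term Fs)) : Forall P l :=
       match l with
       | nil => Forall_nil P
       | cons x l' => Forall_cons x (term_nested_ind P Hvar Happ x) (go l')
       end) ts)
  end.

Lemma teval_ext (e1 e2 : nat -> M) t : (forall i, e1 i = e2 i) -> teval e1 t = teval e2 t.
Proof.
  intro He. induction t using term_nested_ind; simpl; auto.
  f_equal. induction H; simpl; f_equal; auto.
Qed.

Lemma upd_ext (e1 e2 : nat -> M) n a : (forall i, e1 i = e2 i) -> forall i, upd e1 n a i = upd e2 n a i.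
Proof. intros He i. unfold upd. destruct (Nat.eqb i n); auto. Qed.

Lemma sat_ext (phi : formula Fs Rs) :
  forall e1 e2 : nat -> M, (forall i, e1 i = e2 i) -> (sat e1 phi <-> sat e2 phi).
Proof.
  induction phi; intros e1 e2 He; simpl.
  - rewrite (map_ext (teval e1) (teval e2)) by (intro; apply teval_ext; auto). tauto.
  - rewrite (teval_ext e1 e2 t), (teval_ext e1 e2 t0) by auto. tauto.
  - rewrite (IHphi e1 e2 He); tauto.
  - rewrite (IHphi1 e1 e2 He), (IHphi2 e1 e2 He); tauto.
  - split; intros [a Ha]; exists a; revert Ha; apply IHphi, upd_ext; auto.
Qed.

Fixpoint trename (s : nat -> nat) (t : term Fs) : term Fs :=
  match t with tvar i => tvar (s i) | tapp f ts => tapp f (map (trename s) ts) end.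

Fixpoint frename (s : nat -> nat) (phi : formula Fs Rs) : formula Fs Rs :=
  match phi with
  | fatom r ts => fatom r (map (trename s) ts)
  | feq t1 t2 => feq (trename s t1) (trename s t2)
  | fneg p => fneg (frename s p)
  | fand p q => fand (frename s p) (frename s q)
  | fex i p => fex (s i) (frename s p)
  end.

Lemma teval_trename (e : nat -> M) s t : teval e (trename s t) = teval (fun i => e (s i)) t.
Proof.
  induction t using term_nested_ind; simpl; auto.
  f_equal. rewrite map_map. induction H; simpl; f_equal; auto.
Qed.

Lemma sat_frename s (s_inj : forall i j, s i = s j -> i = j) (phi : formula Fs Rs) :
  forall e, sat e (frename s phi) <-> sat (fun i => e (s i)) phi.
Proof.
  induction phi; intros e; simpl.
  - rewrite map_map, (map_ext _ (teval (fun i => e (s i)))) by (intro; apply teval_trename). tauto.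
  - rewrite !teval_trename; tauto.
  - rewrite IHphi; tauto.
  - rewrite IHphi1, IHphi2; tauto.
  - assert (E : forall a i, upd e (s n) a (s i) = upd (fun i => e (s i)) n a i).
    { intros a i. unfold upd.
      destruct (Nat.eqb_spec (s i) (s n)) as [h|h], (Nat.eqb_spec i n) as [h'|h'];
        auto; [apply s_inj in h | subst]; contradiction. }
    split; intros [a Ha]; exists a; revert Ha; rewrite IHphi; apply sat_ext; auto.
Qed.

Lemma definable_ext n (P Q : list M -> Prop) :
  definable n P -> (forall l, length l = n -> (P l <-> Q l)) -> definable n Q.
Proof. intros [phi [e HP]] HPQ. exists phi, e. intros l Hl. rewrite <- HPQ; auto. Qed.

Lemma definable_not n (P : list M -> Prop) : definable n P -> definable n (fun l => ~ P l).
Proof. intros [phi [e HP]]. exists (fneg phi), e. intros l Hl. simpl. rewrite (HP l Hl). tauto. Qed.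

Lemma env_app_ge (l : list M) e i : length l <= i -> env_app l e i = e i.
Proof. intro h. unfold env_app. rewrite (proj2 (nth_error_None l i) h). auto. Qed.

Lemma env_app_lt (l : list M) e e' i : i < length l -> env_app l e i = env_app l e' i.
Proof.
  intro h. unfold env_app. destruct (nth_error l i) eqn:E; auto.
  apply nth_error_None in E. lia.
Qed.

(* The parameters of the two conjuncts are interleaved on the even and odd variables. *)
Lemma definable_and n (P Q : list M -> Prop) :
  definable n P -> definable n Q -> definable n (fun l => P l /\ Q l).
Proof.
  intros [p1 [e1 H1]] [p2 [e2 H2]].
  set (s1 := fun i => if Nat.ltb i n then i else 2 * i).
  set (s2 := fun i => if Nat.ltb i n then i else 2 * i + 1).
  set (e := fun j => if Nat.even j then e1 (Nat.div2 j) else e2 (Nat.div2 j)).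
  assert (s1_inj : forall i j, s1 i = s1 j -> i = j).
  { intros i j; unfold s1; destruct (Nat.ltb_spec i n), (Nat.ltb_spec j n); lia. }
  assert (s2_inj : forall i j, s2 i = s2 j -> i = j).
  { intros i j; unfold s2; destruct (Nat.ltb_spec i n), (Nat.ltb_spec j n); lia. }
  exists (fand (frename s1 p1) (frename s2 p2)), e. intros l Hl. simpl.
  rewrite (sat_frename s1 s1_inj), (sat_frename s2 s2_inj), (H1 l Hl), (H2 l Hl).
  assert (E1 : sat (fun i => env_app l e (s1 i)) p1 <-> sat (env_app l e1) p1).
  { apply sat_ext. intro i. unfold s1. destruct (Nat.ltb_spec i n); [apply env_app_lt; lia|].
    rewrite !env_app_ge by lia. unfold e. rewrite Nat.even_even, Nat.div2_double; auto. }
  assert (E2 : sat (fun i => env_app l e (s2 i)) p2 <-> sat (env_app l e2) p2).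
  { apply sat_ext. intro i. unfold s2. destruct (Nat.ltb_spec i n); [apply env_app_lt; lia|].
    rewrite !env_app_ge by lia. unfold e. rewrite Nat.even_odd, Nat.div2_odd'; auto. }
  tauto.
Qed.

Fixpoint fexists_from (n m : nat) (phi : formula Fs Rs) : formula Fs Rs :=
  match m with O => phi | S m => fex n (fexists_from (S n) m phi) end.

Fixpoint upd_from (e : nat -> M) (n : nat) (l : list M) : nat -> M :=
  match l with nil => e | a :: l => upd_from (upd e n a) (S n) l end.

Lemma sat_fexists_from phi m :
  forall n e, sat e (fexists_from n m phi) <-> exists l, length l = m /\ sat (upd_from e n l) phi.
Proof.
  induction m; intros n e; simpl.
  - split; [intro h; exists nil; auto |].
    intros [[|a l] [Hl h]]; [exact h | discriminate].
  - split.
    + intros [a Ha]. apply IHm in Ha. destruct Ha as [l [Hl h]]. exists (a :: l); simpl; auto.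
    + intros [[|a l] [Hl h]]; [discriminate|]. exists a. apply IHm. exists l. simpl in *; auto.
Qed.

Lemma upd_from_ext l :
  forall n (e1 e2 : nat -> M), (forall i, e1 i = e2 i) -> forall i, upd_from e1 n l i = upd_from e2 n l i.
Proof. induction l; intros n e1 e2 He; simpl; auto using upd_ext. Qed.

Lemma upd_from_env_app l : forall (h : list M) e i, upd_from (env_app h e) (length h) l i = env_app (h ++ l) e i.
Proof.
  induction l as [|a l IH]; intros h e i; simpl.
  - rewrite app_nil_r; auto.
  - assert (E : forall j, upd (env_app h e) (length h) a j = env_app (h ++ [a]) e j).
    { intro j. unfold upd, env_app. destruct (Nat.eqb_spec j (length h)) as [->|ne].
      - rewrite nth_error_app2, Nat.sub_diag by lia. auto.
      - destruct (Nat.lt_ge_cases j (length h)).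
        + rewrite nth_error_app1; auto.
        + rewrite (proj2 (nth_error_None h j)), (proj2 (nth_error_None (h ++ [a]) j)); auto.
          rewrite length_app; simpl; lia. }
    rewrite (upd_from_ext l _ _ _ E).
    replace (S (length h)) with (length (h ++ [a])) by (rewrite length_app; simpl; lia).
    rewrite IH, <- app_assoc. auto.
Qed.

Lemma definable_exists_suffix n m (Q : list M -> Prop) :
  definable (n + m) Q -> definable n (fun h => exists l, length l = m /\ Q (h ++ l)).
Proof.
  intros [phi [e HQ]]. exists (fexists_from n m phi), e. intros h Hh.
  rewrite sat_fexists_from. subst n.
  split; intros [l [Hl H]]; exists l; split; auto;
    rewrite (sat_ext phi _ _ (upd_from_env_app l h e)) in *; apply HQ; auto;
    rewrite length_app; lia.
Qed.

Lemma definable_skipn j n (P : list M -> Prop) :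
  definable n P -> definable (j + n) (fun b => P (skipn j b)).
Proof.
  intros [phi [e HP]].
  set (s := fun i => i + j). assert (s_inj : forall a b, s a = s b -> a = b) by (unfold s; intros; lia).
  exists (frename s phi), (fun p => e (p - j)). intros b Hb.
  rewrite (sat_frename s s_inj), HP by (rewrite length_skipn; lia).
  apply sat_ext. intro i. unfold s. destruct (Nat.lt_ge_cases i n).
  - unfold env_app. rewrite nth_error_skipn, (Nat.add_comm i j).
    destruct (nth_error b (j + i)) eqn:E; [auto | apply nth_error_None in E; lia].
  - rewrite !env_app_ge; try rewrite length_skipn; try lia. f_equal; lia.
Qed.

End Definability.

Lemma predicate_ext {T : Type} (P Q : T -> Prop) : (forall x, P x <-> Q x) -> P = Q.
Proof. intro h. apply functional_extensionality; intro x; apply propositional_extensionality; auto. Qed.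

Definition chain {T : Type} (F : (T -> Prop) -> Prop) : Prop :=
  forall A B, F A -> F B -> (forall x, A x -> B x) \/ (forall x, B x -> A x).

Lemma zorn_maximal (T : Type) (P : (T -> Prop) -> Prop) :
  (forall F, (forall A, F A -> P A) -> chain F -> P (fun x => exists A, F A /\ A x)) ->
  exists A, P A /\ forall B, (forall x, A x -> B x) -> P B -> forall x, B x -> A x.
Proof.
  intros H.
  destruct (@classical_sets.Zorn_bigcup T P) as [A [PA HA]].
  - intros F FP Ftot.
    replace (classical_sets.bigcup F (fun X => X)) with (fun x => exists A, F A /\ A x).
    + apply H; auto.
    + apply predicate_ext; intro x. split.
      * intros [i [Fi ix]]; econstructor; eauto.
      * intros [i Fi ix]; eauto.
  - exists A; split; auto. intros B AB PB x Bx.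
    apply NNPP; intro nAx. apply (HA B); auto.
    split; [exact AB|]. intro BA. apply nAx, BA, Bx.
Qed.

(* Apply [zorn_maximal] to the complements [S0 \ S]. *)
Lemma zorn_minimal (T : Type) (Q : (T -> Prop) -> Prop) (S0 : T -> Prop) :
  Q S0 ->
  (forall F, (forall S, F S -> Q S /\ forall x, S x -> S0 x) -> chain F ->
     Q (fun x => S0 x /\ forall S, F S -> S x)) ->
  exists S, Q S /\ (forall x, S x -> S0 x) /\
    forall S', Q S' -> (forall x, S' x -> S x) -> forall x, S x -> S' x.
Proof.
  intros Q0 Hchain.
  set (P := fun A : T -> Prop => (forall x, A x -> S0 x) /\ Q (fun x => S0 x /\ ~ A x)).
  destruct (zorn_maximal T P) as [A [[AS0 QA] Amax]].
  - intros F FP Ftot. split.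
    + intros x [A0 [FA0 A0x]]. exact (proj1 (FP A0 FA0) x A0x).
    + set (F' := fun S : T -> Prop => exists A0, F A0 /\ S = (fun x => S0 x /\ ~ A0 x)).
      replace (fun x => S0 x /\ ~ (exists A0, F A0 /\ A0 x))
        with (fun x => S0 x /\ forall S, F' S -> S x).
      * apply Hchain.
        -- intros S [A0 [FA0 ->]]. split; [apply (FP A0 FA0)|]. intros x [h _]; exact h.
        -- intros S1 S2 [A1 [FA1 ->]] [A2 [FA2 ->]].
           destruct (Ftot A1 A2 FA1 FA2) as [h|h]; [right|left]; intros x [s nx]; split; auto.
      * apply predicate_ext; intro x. split.
        -- intros [s0 H]. split; auto. intros [A0 [FA0 A0x]].
           apply (proj2 (H (fun x => S0 x /\ ~ A0 x) (ex_intro _ A0 (conj FA0 eq_refl)))); auto.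
        -- intros [s0 nA]. split; auto. intros S [A0 [FA0 ->]]. split; auto. intro a; apply nA; eauto.
  - exists (fun x => S0 x /\ ~ A x). split; [exact QA|]. split; [intros x [h _]; exact h|].
    intros S' QS' S'S x [s0x nAx].
    apply NNPP; intro nS'x.
    assert (PB : P (fun y => S0 y /\ ~ S' y)).
    { split; [intros y [h _]; exact h|].
      replace (fun y => S0 y /\ ~ (S0 y /\ ~ S' y)) with S'; [exact QS'|].
      apply predicate_ext; intro y. split.
      - intro h. split; [exact (proj1 (S'S y h))| intros [_ h']; auto].
      - intros [h1 h2]. apply NNPP; intro h3. apply h2. split; auto. }
    apply nAx, (Amax _ (fun y Ay => conj (AS0 y Ay) (fun h => proj2 (S'S y h) Ay)) PB). split; auto.
Qed.

Open Scope R_scope.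

Definition close_on {J : Type} (js : list J) (eps : R) (f g : J -> R) : Prop :=
  forall j, In j js -> Rabs (g j - f j) < eps.

(* The product topology on [J -> R] in which only the coordinates satisfying [A] count;
   for [A := inB k G] these are exactly [prod_open k G] and [prod_closed k G]. *)
Definition coord_open {J : Type} (A : J -> Prop) (U : (J -> R) -> Prop) : Prop :=
  forall f, U f -> exists js eps, 0 < eps /\ (forall j, In j js -> A j) /\
    forall g, close_on js eps f g -> U g.

Definition coord_closed {J : Type} (A : J -> Prop) (C : (J -> R) -> Prop) : Prop :=
  coord_open A (fun f => ~ C f).

Definition coord_continuous {J : Type} (A : J -> Prop) (F : (J -> R) -> R) : Prop :=
  forall f eps, 0 < eps -> exists js d, 0 < d /\ (forall j, In j js -> A j) /\
    forall g, close_on js d f g -> Rabs (F g - F f) < eps.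

Definition unit_cube {J : Type} (A : J -> Prop) (f : J -> R) : Prop :=
  forall j, A j -> 0 <= f j <= 1.

Definition fip {P : Type} (Phi : (P -> Prop) -> Prop) : Prop :=
  forall Cs : list (P -> Prop), (forall C, In C Cs -> Phi C) -> exists f, forall C, In C Cs -> C f.

Lemma fip_sub {P : Type} (Phi Psi : (P -> Prop) -> Prop) :
  fip Phi -> (forall C, Psi C -> Phi C) -> fip Psi.
Proof. intros h hsub Cs HCs. apply h. auto. Qed.

Lemma exists_maximal_fip {P : Type} (Phi : (P -> Prop) -> Prop) : fip Phi ->
  exists U, (forall C, Phi C -> U C) /\ fip U /\
    forall S, fip (fun C => U C \/ C = S) -> U S.
Proof.
  intros Phi_fip.
  destruct (zorn_maximal _ (fun Mf => fip (fun C => Phi C \/ Mf C))) as [Mf [Mf_fip Mf_max]].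
  - intros F F_fip F_chain Cs HCs.
    assert (H : (forall C, In C Cs -> Phi C) \/
                exists Mf, F Mf /\ forall C, In C Cs -> Phi C \/ Mf C).
    { clear -F_chain HCs. induction Cs as [|C Cs IH]; [left; intros C []|].
      destruct (IH (fun D h => HCs D (or_intror h))) as [h|[Mf [FMf h]]];
        destruct (HCs C (or_introl eq_refl)) as [hC|[M1 [FM1 M1C]]].
      - left; intros D [<-|hD]; auto.
      - right; exists M1; split; auto; intros D [<-|hD]; auto.
      - right; exists Mf; split; auto; intros D [<-|hD]; auto.
      - destruct (F_chain M1 Mf FM1 FMf) as [s|s]; right; [exists Mf | exists M1];
          split; auto; intros D [<-|hD]; auto; destruct (h D hD); auto. }
    destruct H as [h|[Mf [FMf h]]]; [apply Phi_fip | apply (F_fip Mf FMf)]; auto.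
  - exists (fun C => Phi C \/ Mf C). split; [auto|]. split; [exact Mf_fip|].
    intros S HS. right. apply (Mf_max (fun C => Mf C \/ C = S)); [auto | | auto].
    apply (fip_sub _ _ HS). intros C [|[|]]; auto.
Qed.

Section Ultrafilter.
Variables (P : Type) (U : (P -> Prop) -> Prop).
Hypothesis U_fip : fip U.
Hypothesis U_max : forall S, fip (fun C => U C \/ C = S) -> U S.

Lemma ultra_add S :
  (forall Cs, (forall C, In C Cs -> U C) -> exists f, S f /\ forall C, In C Cs -> C f) -> U S.
Proof.
  intros HS. apply U_max. intros Cs HCs.
  set (Cs' := filter (fun D => if excluded_middle_informative (U D) then true else false) Cs).
  assert (HCs' : forall C, In C Cs' <-> In C Cs /\ U C).
  { intro C. unfold Cs'. rewrite filter_In.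
    destruct (excluded_middle_informative (U C)); intuition discriminate. }
  destruct (HS Cs') as [f [Sf Hf]]; [intros C hC; apply HCs', hC|].
  exists f. intros C hC. destruct (HCs C hC) as [h| ->]; auto. apply Hf, HCs'; auto.
Qed.

Lemma ultra_meets C D : U C -> U D -> exists f, C f /\ D f.
Proof.
  intros hC hD. destruct (U_fip [C; D]) as [f Hf]; [intros E [<-|[<-|[]]]; auto|].
  exists f; split; apply Hf; simpl; auto.
Qed.

Lemma ultra_superset C S : U C -> (forall f, C f -> S f) -> U S.
Proof.
  intros hC CS. apply ultra_add. intros Cs HCs.
  destruct (U_fip (C :: Cs)) as [f Hf]; [intros D [<-|h]; auto|].
  exists f; split; [apply CS, Hf; left; auto|]. intros D hD; apply Hf; right; auto.
Qed.

Lemma ultra_inter C1 C2 : U C1 -> U C2 -> U (fun f => C1 f /\ C2 f).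
Proof.
  intros h1 h2. apply ultra_add. intros Cs HCs.
  destruct (U_fip (C1 :: C2 :: Cs)) as [f Hf]; [intros D [<-|[<-|h]]; auto|].
  exists f; split; [split; apply Hf; simpl; auto|]. intros D hD; apply Hf; right; right; auto.
Qed.

Lemma ultra_prime S1 S2 : (forall f, S1 f \/ S2 f) -> U S1 \/ U S2.
Proof.
  intros H12. apply NNPP; intro hn. apply not_or_and in hn. destruct hn as [n1 n2].
  assert (witness : forall S, ~ U S ->
      exists Cs, (forall C, In C Cs -> U C) /\ ~ exists f, S f /\ forall C, In C Cs -> C f).
  { intros S nS. apply NNPP; intro h. apply nS, ultra_add. intros Cs HCs.
    apply NNPP; intro h'. apply h. exists Cs; auto. }
  destruct (witness S1 n1) as [Cs1 [U1 h1]], (witness S2 n2) as [Cs2 [U2 h2]].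
  destruct (U_fip (Cs1 ++ Cs2)) as [f Hf].
  { intros C hC. apply in_app_or in hC. destruct hC; auto. }
  destruct (H12 f); [apply h1 | apply h2]; exists f; split; auto;
    intros C hC; apply Hf, in_or_app; auto.
Qed.

End Ultrafilter.

Section CubeUltrafilter.
Variables (J : Type) (A : J -> Prop) (U : ((J -> R) -> Prop) -> Prop) (C0 : (J -> R) -> Prop).
Hypothesis U_fip : fip U.
Hypothesis U_max : forall S, fip (fun C => U C \/ C = S) -> U S.
Hypothesis U_C0 : U C0.
Hypothesis C0_cube : forall f, C0 f -> unit_cube A f.

(* The limit is the supremum of the thresholds [t] with [{f | t <= f j}] in [U]. *)
Lemma ultra_coord_limit j : A j -> exists s, forall eps, 0 < eps -> U (fun f => Rabs (f j - s) < eps).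
Proof.
  intros Aj. set (E := fun t => U (fun f => t <= f j)).
  destruct (completeness E) as [s [ub lub]].
  - exists 1. intros t Et.
    destruct (ultra_meets _ _ U_fip _ _ Et U_C0) as [f [h1 h2]].
    specialize (C0_cube f h2 j Aj). lra.
  - exists 0. apply (ultra_superset _ _ U_fip U_max C0); auto.
    intros f hf. apply (C0_cube f hf j Aj).
  - exists s. intros eps heps.
    assert (lower : U (fun f => s - eps/2 <= f j)).
    { apply NNPP; intro h. assert (s <= s - eps/2); [|lra].
      apply lub. intros t Et. destruct (Rle_dec t (s - eps/2)) as [r|r]; auto.
      exfalso; apply h. apply (ultra_superset _ _ U_fip U_max _ _ Et). intros f hf. lra. }
    destruct (ultra_prime _ _ U_fip U_max (fun f => s + eps/2 <= f j) (fun f => f j <= s + eps/2))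
      as [h|upper]; [intro f; lra | specialize (ub _ h); lra |].
    apply (ultra_superset _ _ U_fip U_max _ _ (ultra_inter _ _ U_fip U_max _ _ lower upper)).
    intros f [a b]. apply Rabs_def1; lra.
Qed.

Lemma ultra_limit : exists p, forall js eps, (forall j, In j js -> A j) -> 0 < eps -> U (close_on js eps p).
Proof.
  assert (lim : forall j, exists s, A j -> forall eps, 0 < eps -> U (fun f => Rabs (f j - s) < eps)).
  { intro j. destruct (classic (A j)) as [Aj|nAj]; [|exists 0; contradiction].
    destruct (ultra_coord_limit j Aj) as [s hs]. eauto. }
  exists (fun j => proj1_sig (constructive_indefinite_description _ (lim j))).
  induction js as [|j js IH]; intros eps hA heps.
  - apply (ultra_superset _ _ U_fip U_max C0); [auto | intros f _ j []].
  - destruct (constructive_indefinite_description _ (lim j)) as [s hs] eqn:E.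
    apply (ultra_superset _ _ U_fip U_max _ _
      (ultra_inter _ _ U_fip U_max _ _ (hs (hA j (or_introl eq_refl)) eps heps)
        (IH eps (fun j h => hA j (or_intror h)) heps))).
    intros f [a b] j' [<-|h]; [rewrite E|]; auto.
Qed.

End CubeUltrafilter.

(* Tychonoff's theorem for [[0,1]^A], in its finite-intersection form. *)
Theorem cube_fip_inter (J : Type) (A : J -> Prop) (Phi : ((J -> R) -> Prop) -> Prop)
  (C0 : (J -> R) -> Prop) :
  (forall C, Phi C -> coord_closed A C) -> Phi C0 -> (forall f, C0 f -> unit_cube A f) ->
  fip Phi -> exists f, forall C, Phi C -> C f.
Proof.
  intros Phi_closed PhiC0 C0_cube Phi_fip.
  destruct (exists_maximal_fip Phi Phi_fip) as [U [PhiU [U_fip U_max]]].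
  destruct (ultra_limit J A U C0 U_fip U_max (PhiU C0 PhiC0) C0_cube) as [p basic].
  exists p. intros C PhiC. apply NNPP; intro nC.
  destruct (Phi_closed C PhiC p nC) as [js [eps [heps [hA hU]]]].
  destruct (ultra_meets _ _ U_fip _ _ (PhiU C PhiC) (basic js eps hA heps)) as [f [Cf nf]].
  exact (hU f nf Cf).
Qed.

Fixpoint rsum (n : nat) (a : nat -> R) : R :=
  match n with O => 0 | S n => rsum n a + a n end.

Lemma rsum_ext n a b : (forall i, (i < n)%nat -> a i = b i) -> rsum n a = rsum n b.
Proof. induction n; simpl; intros; auto. rewrite IHn, H; auto. Qed.

Lemma rsum_plus n a b : rsum n (fun i => a i + b i) = rsum n a + rsum n b.
Proof. induction n; simpl; auto; lra. Qed.

Lemma rsum_scal n c a : rsum n (fun i => c * a i) = c * rsum n a.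
Proof. induction n; simpl; [ring|]. rewrite IHn. ring. Qed.

Lemma rsum_nonneg n a : (forall i, (i < n)%nat -> 0 <= a i) -> 0 <= rsum n a.
Proof.
  induction n; simpl; intros H; [lra|].
  assert (0 <= rsum n a) by (apply IHn; intros; apply H; lia).
  assert (0 <= a n) by (apply H; lia). lra.
Qed.

Lemma rsum_le_elem n a i : (forall i, (i < n)%nat -> 0 <= a i) -> (i < n)%nat -> a i <= rsum n a.
Proof.
  induction n; simpl; intros H hi; [lia|].
  assert (0 <= rsum n a) by (apply rsum_nonneg; intros; apply H; lia).
  destruct (Nat.eq_dec i n) as [->|ne]; [lra|].
  assert (a i <= rsum n a) by (apply IHn; intros; [apply H|]; lia).
  assert (0 <= a n) by (apply H; lia). lra.
Qed.

Lemma rsum_zero n a : (forall i, (i < n)%nat -> a i = 0) -> rsum n a = 0.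
Proof. induction n; simpl; intros H; auto. rewrite IHn, H; auto; lra. Qed.

Lemma rsum_delta n i (a : nat -> R) :
  (i < n)%nat -> rsum n (fun j => if Nat.eqb j i then a j else 0) = a i.
Proof.
  induction n; simpl; intros hi; [lia|].
  destruct (Nat.eqb_spec n i) as [->|ne].
  - rewrite rsum_zero; [lra|]. intros j hj. destruct (Nat.eqb_spec j i); [lia|auto].
  - rewrite IHn; [lra|lia].
Qed.

Lemma eq_of_close (a b : R) : (forall d, 0 < d -> Rabs (a - b) <= d) -> a = b.
Proof.
  intro h. destruct (Req_dec a b) as [|ne]; auto. exfalso.
  assert (hp : 0 < Rabs (a - b)) by (apply Rabs_pos_lt; lra).
  specialize (h (Rabs (a - b) / 2) ltac:(lra)). lra.
Qed.

Section CoordTopology.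
Variables (J : Type) (A : J -> Prop).
Implicit Types (js : list J) (f g h : J -> R) (d eps : R).

Lemma close_on_app js1 js2 d1 d2 f g :
  close_on (js1 ++ js2) (Rmin d1 d2) f g -> close_on js1 d1 f g /\ close_on js2 d2 f g.
Proof.
  intros H. split; intros j hj.
  - apply Rlt_le_trans with (Rmin d1 d2); [apply H, in_or_app; auto | apply Rmin_l].
  - apply Rlt_le_trans with (Rmin d1 d2); [apply H, in_or_app; auto | apply Rmin_r].
Qed.

Lemma close_on_refl js d f : 0 < d -> close_on js d f f.
Proof. intros hd j _. rewrite Rminus_diag, Rabs_R0. lra. Qed.

Lemma close_on_trans js d1 d2 f g h :
  close_on js d1 f g -> close_on js d2 g h -> close_on js (d1 + d2) f h.
Proof.
  intros h1 h2 j hj. specialize (h1 j hj). specialize (h2 j hj).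
  replace (h j - f j) with ((h j - g j) + (g j - f j)) by ring.
  eapply Rle_lt_trans; [apply Rabs_triang|lra].
Qed.

Lemma admissible_app (js1 js2 : list J) :
  (forall j, In j js1 -> A j) -> (forall j, In j js2 -> A j) -> forall j, In j (js1 ++ js2) -> A j.
Proof. intros h1 h2 j hj. apply in_app_or in hj. destruct hj; auto. Qed.

Lemma close_on_open js eps f g :
  close_on js eps f g -> exists d, 0 < d /\ forall h, close_on js d g h -> close_on js eps f h.
Proof.
  induction js as [|j js IH]; intros H.
  - exists 1. split; [lra|]. intros h _ j [].
  - destruct IH as [d [hd Hd]]; [intros j' hj'; apply H; right; auto|].
    set (d1 := eps - Rabs (g j - f j)).
    assert (hd1 : 0 < d1) by (unfold d1; specialize (H j (or_introl eq_refl)); lra).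
    exists (Rmin d d1). split; [apply Rmin_glb_lt; auto|].
    intros h hh j' [<-|hj'].
    + assert (Rabs (h j - g j) < d1).
      { eapply Rlt_le_trans; [exact (hh j (or_introl eq_refl)) | apply Rmin_r]. }
      replace (h j - f j) with ((h j - g j) + (g j - f j)) by ring.
      eapply Rle_lt_trans; [apply Rabs_triang|]. unfold d1 in *; lra.
    + apply Hd; auto. intros j'' hj''.
      eapply Rlt_le_trans; [apply hh; right; auto | apply Rmin_l].
Qed.

Lemma coord_open_close_on js eps f : (forall j, In j js -> A j) -> coord_open A (close_on js eps f).
Proof. intros hA g hg. destruct (close_on_open js eps f g hg) as [d [hd Hd]]. exists js, d; auto. Qed.

Lemma continuous_coord j : A j -> coord_continuous A (fun f => f j).
Proof.
  intros Aj f eps he. exists [j], eps. split; auto. split; [intros j' [<-|[]]; auto|].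
  intros g hg. apply hg; left; auto.
Qed.

Lemma continuous_const c : coord_continuous A (fun _ => c).
Proof.
  intros f eps he. exists [], 1. split; [lra|]. split; [intros _ []|].
  intros g _. rewrite Rminus_diag, Rabs_R0; lra.
Qed.

Lemma continuous_plus F H :
  coord_continuous A F -> coord_continuous A H -> coord_continuous A (fun f => F f + H f).
Proof.
  intros cF cH f eps he.
  destruct (cF f (eps/2)) as [js1 [d1 [hd1 [hA1 h1]]]]; [lra|].
  destruct (cH f (eps/2)) as [js2 [d2 [hd2 [hA2 h2]]]]; [lra|].
  exists (js1 ++ js2), (Rmin d1 d2). split; [apply Rmin_glb_lt; auto|].
  split; [apply admissible_app; auto|].
  intros g hg. destruct (close_on_app _ _ _ _ _ _ hg) as [g1 g2].
  specialize (h1 g g1). specialize (h2 g g2).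
  replace (F g + H g - (F f + H f)) with ((F g - F f) + (H g - H f)) by ring.
  eapply Rle_lt_trans; [apply Rabs_triang|lra].
Qed.

Lemma continuous_opp F : coord_continuous A F -> coord_continuous A (fun f => - F f).
Proof.
  intros cF f eps he. destruct (cF f eps he) as [js [d [hd [hA h]]]].
  exists js, d. repeat split; auto. intros g hg.
  replace (- F g - - F f) with (- (F g - F f)) by ring. rewrite Rabs_Ropp; auto.
Qed.

Lemma continuous_minus F H :
  coord_continuous A F -> coord_continuous A H -> coord_continuous A (fun f => F f - H f).
Proof. intros; apply continuous_plus, continuous_opp; auto. Qed.

Lemma continuous_abs F : coord_continuous A F -> coord_continuous A (fun f => Rabs (F f)).
Proof.
  intros cF f eps he. destruct (cF f eps he) as [js [d [hd [hA h]]]].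
  exists js, d. repeat split; auto. intros g hg.
  eapply Rle_lt_trans; [apply Rabs_triang_inv2|]. auto.
Qed.

(* |F g H g - F f H f| <= |F g - F f| |H f| + |F g| |H g - H f|,
   with |F g| <= |F f| + 1 once |F g - F f| <= 1. *)
Lemma continuous_mult F H :
  coord_continuous A F -> coord_continuous A H -> coord_continuous A (fun f => F f * H f).
Proof.
  intros cF cH f eps he.
  set (a := Rabs (F f)). set (b := Rabs (H f)).
  assert (ha : 0 <= a) by apply Rabs_pos. assert (hb : 0 <= b) by apply Rabs_pos.
  set (e1 := Rmin 1 (eps / (2 * (b + 1)))).
  set (e2 := eps / (2 * (a + 2))).
  assert (he1 : 0 < e1) by (apply Rmin_glb_lt; [lra | apply Rdiv_lt_0_compat; lra]).
  assert (he2 : 0 < e2) by (apply Rdiv_lt_0_compat; lra).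
  destruct (cF f e1 he1) as [js1 [d1 [hd1 [hA1 h1]]]].
  destruct (cH f e2 he2) as [js2 [d2 [hd2 [hA2 h2]]]].
  exists (js1 ++ js2), (Rmin d1 d2). split; [apply Rmin_glb_lt; auto|].
  split; [apply admissible_app; auto|].
  intros g hg. destruct (close_on_app _ _ _ _ _ _ hg) as [g1 g2].
  specialize (h1 g g1). specialize (h2 g g2).
  replace (F g * H g - F f * H f) with ((F g - F f) * H f + F g * (H g - H f)) by ring.
  eapply Rle_lt_trans; [apply Rabs_triang|]. rewrite !Rabs_mult.
  assert (x1 : Rabs (F g - F f) <= 1) by (assert (e1 <= 1) by apply Rmin_l; lra).
  assert (x2 : Rabs (F g - F f) <= eps / (2 * (b + 1))).
  { assert (e1 <= eps / (2 * (b + 1))) by apply Rmin_r; lra. }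
  assert (Fg : Rabs (F g) <= a + 1).
  { replace (F g) with ((F g - F f) + F f) by ring.
    eapply Rle_trans; [apply Rabs_triang|]. unfold a; lra. }
  assert (t1 : Rabs (F g - F f) * b <= eps / 2).
  { apply Rle_trans with (eps / (2 * (b+1)) * (b + 1)).
    - apply Rmult_le_compat; try lra; apply Rabs_pos.
    - right. field. lra. }
  assert (t2 : Rabs (F g) * Rabs (H g - H f) < eps / 2).
  { apply Rle_lt_trans with ((a + 1) * e2).
    - apply Rmult_le_compat; try lra; apply Rabs_pos.
    - unfold e2. apply Rlt_le_trans with ((a + 2) * (eps / (2 * (a + 2)))).
      + apply Rmult_lt_compat_r; [apply Rdiv_lt_0_compat|]; lra.
      + right. field. lra. }
  fold b. lra.
Qed.

Lemma continuous_rsum n (F : nat -> (J -> R) -> R) :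
  (forall i, (i < n)%nat -> coord_continuous A (F i)) ->
  coord_continuous A (fun f => rsum n (fun i => F i f)).
Proof.
  induction n; simpl; intros h; [apply continuous_const|].
  apply continuous_plus; [apply IHn; intros; apply h | apply h]; lia.
Qed.

Lemma closed_le F H :
  coord_continuous A F -> coord_continuous A H -> coord_closed A (fun f => F f <= H f).
Proof.
  intros cF cH f nle. apply Rnot_le_lt in nle.
  destruct (continuous_minus F H cF cH f ((F f - H f) / 2)) as [js [d [hd [hA h]]]]; [lra|].
  exists js, d. split; auto. split; auto. intros g hg. specialize (h g hg).
  apply Rabs_def2 in h. lra.
Qed.

Lemma closed_ext C1 C2 : coord_closed A C1 -> (forall f, C1 f <-> C2 f) -> coord_closed A C2.
Proof.
  intros h e f nf. destruct (h f) as [js [d [hd [hA hh]]]]; [rewrite e; auto|].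
  exists js, d. repeat split; auto. intros g hg c. apply (hh g hg), e; auto.
Qed.

Lemma closed_and C1 C2 :
  coord_closed A C1 -> coord_closed A C2 -> coord_closed A (fun f => C1 f /\ C2 f).
Proof.
  intros h1 h2 f nf. destruct (classic (C1 f)) as [c1|c1].
  - destruct (h2 f (fun c2 => nf (conj c1 c2))) as [js [d [hd [hA h]]]].
    exists js, d. repeat split; auto. intros g hg [_ c]. apply (h g hg c).
  - destruct (h1 f c1) as [js [d [hd [hA h]]]]. exists js, d. repeat split; auto.
    intros g hg [c _]. apply (h g hg c).
Qed.

Lemma closed_all (I : Type) (C : I -> (J -> R) -> Prop) :
  (forall i, coord_closed A (C i)) -> coord_closed A (fun f => forall i, C i f).
Proof.
  intros h f nf. apply not_all_ex_not in nf. destruct nf as [i ni].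
  destruct (h i f ni) as [js [d [hd [hA hh]]]]. exists js, d. repeat split; auto.
  intros g hg c. apply (hh g hg (c i)).
Qed.

Lemma closed_impl (P : Prop) C : (P -> coord_closed A C) -> coord_closed A (fun f => P -> C f).
Proof.
  intros h. destruct (classic P) as [p|p].
  - apply (closed_ext _ _ (h p)). intros; tauto.
  - intros f nf. exfalso. apply nf. intro; contradiction.
Qed.

Lemma closed_eq F H :
  coord_continuous A F -> coord_continuous A H -> coord_closed A (fun f => F f = H f).
Proof.
  intros cF cH. apply (closed_ext _ _ (closed_and _ _ (closed_le F H cF cH) (closed_le H F cH cF))).
  intros f; split; [intros [a b]; lra | intros e; rewrite e; lra].
Qed.

Lemma closed_not_open U : coord_open A U -> coord_closed A (fun f => ~ U f).
Proof.
  intros h f nf. apply NNPP in nf. destruct (h f nf) as [js [d [hd [hA hh]]]].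
  exists js, d. repeat split; auto.
Qed.

Lemma closed_agree C f g : coord_closed A C -> (forall j, A j -> f j = g j) -> C f -> C g.
Proof.
  intros hC e cf. apply NNPP; intro n. destruct (hC g n) as [js [d [hd [hA hh]]]].
  apply (hh f); auto. intros j hj. rewrite e by auto. rewrite Rminus_diag, Rabs_R0; auto.
Qed.

Definition closure (O : (J -> R) -> Prop) (f : J -> R) : Prop :=
  forall js d, (forall j, In j js -> A j) -> 0 < d -> exists g, O g /\ close_on js d f g.

Lemma closure_closed O : coord_closed A (closure O).
Proof.
  intros f nf. unfold closure in nf.
  apply not_all_ex_not in nf. destruct nf as [js nf].
  apply not_all_ex_not in nf. destruct nf as [d nf].
  apply imply_to_and in nf. destruct nf as [hA nf].
  apply imply_to_and in nf. destruct nf as [hd nf].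
  exists js, (d/2). split; [lra|]. split; auto.
  intros g hg cg. destruct (cg js (d/2) hA ltac:(lra)) as [h [Oh nh]].
  apply nf. exists h. split; [exact Oh|]. replace d with (d/2 + d/2) by field.
  apply close_on_trans with g; auto.
Qed.

Lemma closure_incl (O : (J -> R) -> Prop) f : O f -> closure O f.
Proof. intros h js d _ hd. exists f; split; auto; apply close_on_refl; auto. Qed.

Lemma closure_min O C f : coord_closed A C -> (forall g, O g -> C g) -> closure O f -> C f.
Proof.
  intros hC hO hf. apply NNPP; intro n. destruct (hC f n) as [js [d [hd [hA hh]]]].
  destruct (hf js d hA hd) as [g [Og ng]]. apply (hh g); auto.
Qed.

Lemma closure_mono (O1 O2 : (J -> R) -> Prop) f :
  (forall g, O1 g -> O2 g) -> closure O1 f -> closure O2 f.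
Proof. intros h c js d hjs hd. destruct (c js d hjs hd) as [g [Og ng]]. eauto. Qed.

Lemma unit_cube_closed : coord_closed A (unit_cube A).
Proof.
  apply closed_all. intro j. apply closed_impl; intro hj.
  apply closed_and; apply closed_le; auto using continuous_const, continuous_coord.
Qed.

Lemma directed_closed_inter (I : Type) (C0 : (J -> R) -> Prop) (C : I -> (J -> R) -> Prop) :
  coord_closed A C0 -> (forall f, C0 f -> unit_cube A f) -> (exists f, C0 f) ->
  (forall i, coord_closed A (C i)) ->
  (forall i1 i2, exists i, forall f, C i f -> C i1 f /\ C i2 f) ->
  (forall i, exists f, C0 f /\ C i f) ->
  exists f, C0 f /\ forall i, C i f.
Proof.
  intros C0_closed C0_cube C0_ne C_closed C_dir C_meet.
  destruct (cube_fip_inter J A (fun D => D = C0 \/ exists i, D = C i) C0) as [f hf];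
    [intros D [->|[i ->]]; auto | left; auto | auto | |].
  - intros Ds HDs.
    assert (H : (forall D, In D Ds -> D = C0) \/
                exists i, forall D, In D Ds -> D = C0 \/ forall f, C i f -> D f).
    { clear -HDs C_dir. induction Ds as [|D Ds IH]; [left; intros D []|].
      destruct (IH (fun E hE => HDs E (or_intror hE))) as [h|[i h]];
        destruct (HDs D (or_introl eq_refl)) as [->|[i' ->]].
      - left; intros E [<-|hE]; auto.
      - right; exists i'; intros E [<-|hE]; auto.
      - right; exists i; intros E [<-|hE]; auto.
      - destruct (C_dir i i') as [i'' hi'']. right; exists i''.
        intros E [<-|hE]; [right; apply hi''|].
        destruct (h E hE) as [|hsub]; [left | right; intros g hg; apply hsub, hi'']; auto. }
    destruct H as [h|[i h]].
    + destruct C0_ne as [f hf]. exists f. intros D hD. rewrite (h D hD); auto.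
    + destruct (C_meet i) as [f [h0 hi]]. exists f. intros D hD.
      destruct (h D hD) as [->|hsub]; auto.
  - exists f. split; [apply hf; left; auto|]. intros i; apply hf; right; eauto.
Qed.

Lemma closed_cube_compact (I : Type) (S : (J -> R) -> Prop) (U : I -> (J -> R) -> Prop) :
  coord_closed A S -> (forall f, S f -> unit_cube A f) ->
  (forall i, coord_open A (U i)) -> (forall f, S f -> exists i, U i f) ->
  exists is : list I, forall f, S f -> exists i, In i is /\ U i f.
Proof.
  intros S_closed S_cube U_open cover. apply NNPP; intro nfin.
  destruct (directed_closed_inter (list I) S (fun is f => forall i, In i is -> ~ U i f))
    as [f [Sf hf]]; auto.
  - destruct (classic (exists f, S f)) as [|nS]; auto.
    exfalso. apply nfin. exists nil. intros f Sf. exfalso; eauto.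
  - intro is. apply closed_all. intro i. apply closed_impl; intros _. apply closed_not_open; auto.
  - intros is1 is2. exists (is1 ++ is2). intros f hf.
    split; intros i hi; apply hf, in_or_app; auto.
  - intro is. apply NNPP; intro n. apply nfin. exists is. intros f Sf.
    apply NNPP; intro n'. apply n. exists f. split; auto. intros i hi Ui. apply n'; eauto.
  - destruct (cover f Sf) as [i Ui]. apply (hf [i] i); simpl; auto.
Qed.

Lemma exists_minimal_closed (S0 : (J -> R) -> Prop) (P : ((J -> R) -> Prop) -> Prop) :
  coord_closed A S0 -> (exists f, S0 f) -> (forall f, S0 f -> unit_cube A f) ->
  (forall F, (forall S, F S -> P S) -> P (fun f => S0 f /\ forall S, F S -> S f)) ->
  exists S, (exists f, S f) /\ coord_closed A S /\ P S /\ (forall f, S f -> S0 f) /\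
    forall S', (exists f, S' f) -> coord_closed A S' -> P S' -> (forall f, S' f -> S f) ->
      forall f, S f -> S' f.
Proof.
  intros S0_closed S0_ne S0_cube P_inter.
  set (Q := fun S => (exists f, S f) /\ coord_closed A S /\ P S).
  destruct (zorn_minimal _ Q S0) as [S [[S_ne [S_closed PS]] [S_sub S_min]]].
  - split; [auto|]. split; [auto|].
    replace S0 with (fun f => S0 f /\ forall S : (J -> R) -> Prop, False -> S f).
    + apply P_inter. intros _ [].
    + apply predicate_ext. intro f. split; [tauto|]. intro h; split; [auto | intros _ []].
  - intros F hF F_chain. split; [|split].
    + destruct (directed_closed_inter {S | F S} S0 (@proj1_sig _ F)) as [f [h0 h]]; auto.
      * intros [S FS]. apply hF; auto.
      * intros [S1 F1] [S2 F2]. simpl.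
        destruct (F_chain S1 S2 F1 F2) as [s|s]; [exists (exist _ S1 F1) | exists (exist _ S2 F2)];
          simpl; intros f hf; auto.
      * intros [S FS]. destruct (hF S FS) as [[[f hf] _] h0]. exists f; auto.
      * exists f. split; auto. intros S FS. apply (h (exist _ S FS)).
    + apply closed_and; auto. apply closed_all. intro S. apply closed_impl; intro FS. apply hF; auto.
    + apply P_inter. intros S FS. apply hF; auto.
  - exists S. split; [auto|]. split; [auto|]. split; [auto|]. split; [auto|].
    intros S' S'_ne S'_closed PS'. apply S_min. split; auto.
Qed.

End CoordTopology.

Lemma closed_comap {J J' : Type} (A : J -> Prop) (A' : J' -> Prop) (pi : J -> J') C :
  (forall j, A j -> A' (pi j)) -> coord_closed A C -> coord_closed A' (fun f => C (fun j => f (pi j))).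
Proof.
  intros hpi hC f nf. destruct (hC _ nf) as [js [d [hd [hA hh]]]].
  exists (map pi js), d. split; auto. split.
  - intros j' hj'. apply in_map_iff in hj'. destruct hj' as [j [<- hj]]. auto.
  - intros g hg. apply hh. intros j hj. apply hg, in_map; auto.
Qed.

Lemma firstn_app_length {T : Type} n (a b : list T) : length a = n -> firstn n (a ++ b) = a.
Proof. intro h. rewrite firstn_app, <- h, Nat.sub_diag, firstn_all. apply app_nil_r. Qed.

Lemma skipn_app_length {T : Type} n (a b : list T) : length a = n -> skipn n (a ++ b) = b.
Proof. intro h. rewrite skipn_app, <- h, Nat.sub_diag, skipn_all. auto. Qed.

Section KeislerMeasures.
Variables (M : structure) (k : nat) (G : list M -> Prop)
  (mul : list M -> list M -> list M) (inv : list M -> list M) (one : list M).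
Hypothesis G_group : def_group k G mul inv one.
Hypothesis types_definable : forall p, is_type k G p -> definable_type k G p.

Notation B := (inB k G).
Notation closedB := (coord_closed B).

Lemma G_length g : G g -> length g = k. Proof. apply G_group. Qed.
Lemma G_definable : definable k G. Proof. apply G_group. Qed.
Lemma G_one : G one. Proof. apply G_group. Qed.
Lemma G_mul g h : G g -> G h -> G (mul g h). Proof. apply G_group. Qed.
Lemma mulA g h l : G g -> G h -> G l -> mul (mul g h) l = mul g (mul h l). Proof. apply G_group. Qed.
Lemma mul1g g : G g -> mul one g = g. Proof. apply G_group. Qed.

(* The element [g] realizes the (hence definable) type [{X | X g}]. *)
Lemma definable_fix_prefix g m (D : list M -> Prop) :
  G g -> definable (k + m) D -> definable m (fun b => D (g ++ b)).
Proof.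
  intros Gg hD.
  assert (Tg : is_type k G (fun X => X g)) by (split; [auto | split; intros; tauto]).
  apply (definable_ext _ _ _ _ (types_definable _ Tg m D hD)). intros; tauto.
Qed.

Definition translate (g : list M) (X : list M -> Prop) : list M -> Prop :=
  fun h => G h /\ X (mul g h).

Lemma inB_G : B G. Proof. split; [apply G_definable | auto]. Qed.

Lemma inB_or X Y : B X -> B Y -> B (fun g => X g \/ Y g).
Proof.
  intros [hX XG] [hY YG]. split; [|intros g [a|a]; auto].
  apply (definable_ext _ _ _ _ (definable_not _ _ _
    (definable_and _ _ _ _ (definable_not _ _ _ hX) (definable_not _ _ _ hY)))).
  intros; tauto.
Qed.

(* [translate g X] is the projection of [{(h, l) | l = g h /\ X l}], a fiber of the graph of [mul]. *)
Lemma inB_translate g X : G g -> B X -> B (translate g X).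
Proof.
  intros Gg [hX XG]. split; [|intros h [a _]; auto].
  destruct G_group as [_ [_ [graph_def _]]].
  set (graph := fun l => G (firstn k l) /\ G (firstn k (skipn k l)) /\
                  skipn (k + k) l = mul (firstn k l) (firstn k (skipn k l))) in graph_def.
  assert (fiber : definable (k + k) (fun b => graph (g ++ b))).
  { apply definable_fix_prefix; auto. rewrite Nat.add_assoc. auto. }
  assert (proj := definable_exists_suffix _ k k _
                    (definable_and _ _ _ _ fiber (definable_skipn _ k k _ hX))).
  apply (definable_ext _ _ _ _ proj). intros h hh. unfold graph, translate.
  assert (lg := G_length g Gg).
  assert (split3 : forall l, length l = k ->
    firstn k (g ++ h ++ l) = g /\ firstn k (skipn k (g ++ h ++ l)) = h /\
    skipn (k + k) (g ++ h ++ l) = l /\ skipn k (h ++ l) = l).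
  { intros l hl. rewrite (skipn_app_length k g), (firstn_app_length k g), (firstn_app_length k h),
      (skipn_app_length k h) by auto.
    rewrite app_assoc, skipn_app_length by (rewrite length_app; lia). auto. }
  split.
  - intros [l [hl [[G1 [G2 E]] Xl]]]. destruct (split3 l hl) as [e1 [e2 [e3 e4]]].
    rewrite e1, e2, e3 in E. rewrite e2 in G2. rewrite e4 in Xl. subst l. auto.
  - intros [Gh Xm]. exists (mul g h). split; [apply G_length, G_mul; auto|].
    destruct (split3 (mul g h)) as [-> [-> [-> ->]]]; [apply G_length, G_mul|]; auto.
Qed.

Lemma translate_mul g h X : G g -> G h -> translate h (translate g X) = translate (mul g h) X.
Proof.
  intros Gg Gh. apply predicate_ext; intro a. unfold translate. split.
  - intros [Ga [Gha Xa]]. rewrite mulA; auto.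
  - intros [Ga Xa]. rewrite mulA in Xa; auto. split; auto. split; auto. apply G_mul; auto.
Qed.

Lemma translate_one X : B X -> translate one X = X.
Proof.
  intros [_ XG]. apply predicate_ext; intro a. unfold translate. split.
  - intros [Ga Xa]. rewrite mul1g in Xa; auto.
  - intro Xa. assert (Ga := XG a Xa). rewrite mul1g; auto.
Qed.

Lemma translate_G g : G g -> translate g G = G.
Proof.
  intro Gg. apply predicate_ext; intro a. unfold translate.
  split; [tauto|]. intro Ga; split; auto; apply G_mul; auto.
Qed.

Lemma translate_or g X Y : translate g (fun a => X a \/ Y a) = (fun a => translate g X a \/ translate g Y a).
Proof. apply predicate_ext; intro a. unfold translate. tauto. Qed.

(* Points of R^{B_G(M)} are represented by functions on all predicates; [vanishes_off_B] picks
   a canonical representative so that equality on B_G(M) becomes Leibniz equality. *)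
Definition meas := (list M -> Prop) -> R.
Definition vanishes_off_B (mu : meas) : Prop := forall X, ~ B X -> mu X = 0.
Definition restrict_B (mu : meas) : meas :=
  fun X => if excluded_middle_informative (B X) then mu X else 0.
Definition mact (g : list M) (mu : meas) : meas := restrict_B (mtrans G mul g mu).
Definition mix (t : R) (a b : meas) : meas := fun X => t * a X + (1 - t) * b X.
Definition eq_on_B (a b : meas) : Prop := forall X, B X -> a X = b X.

Lemma restrict_B_vanishes mu : vanishes_off_B (restrict_B mu).
Proof. intros X nX. unfold restrict_B. destruct (excluded_middle_informative (B X)); tauto. Qed.

Lemma restrict_B_eq mu : eq_on_B (restrict_B mu) mu.
Proof. intros X hX. unfold restrict_B. destruct (excluded_middle_informative (B X)); tauto. Qed.

Lemma eq_on_B_eq a b : vanishes_off_B a -> vanishes_off_B b -> eq_on_B a b -> a = b.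
Proof.
  intros ha hb e. apply functional_extensionality; intro X.
  destruct (classic (B X)); [apply e | rewrite ha, hb]; auto.
Qed.

Lemma eq_on_B_sym a b : eq_on_B a b -> eq_on_B b a.
Proof. intros h X hX; symmetry; auto. Qed.

Lemma mact_inB g mu X : B X -> mact g mu X = mu (translate g X).
Proof. intro hX. unfold mact, restrict_B. destruct (excluded_middle_informative (B X)); tauto. Qed.

Lemma mact_vanishes g mu : vanishes_off_B (mact g mu).
Proof. apply restrict_B_vanishes. Qed.

Lemma mact_eq_on_B g a b : G g -> eq_on_B a b -> mact g a = mact g b.
Proof.
  intros Gg e. apply eq_on_B_eq; try apply mact_vanishes. intros X hX.
  rewrite !mact_inB; auto. apply e, inB_translate; auto.
Qed.

Lemma mact_mul g h mu : G g -> G h -> mact g (mact h mu) = mact (mul g h) mu.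
Proof.
  intros Gg Gh. apply eq_on_B_eq; try apply mact_vanishes. intros X hX.
  rewrite !mact_inB, translate_mul; auto. apply inB_translate; auto.
Qed.

Lemma mact_one mu : vanishes_off_B mu -> mact one mu = mu.
Proof.
  intros h. apply eq_on_B_eq; [apply mact_vanishes | auto |].
  intros X hX. rewrite mact_inB, translate_one; auto.
Qed.

Lemma mact_mix g t a b : G g -> mact g (mix t a b) = mix t (mact g a) (mact g b).
Proof.
  intros Gg. apply functional_extensionality; intro X. unfold mix.
  destruct (classic (B X)) as [h|h].
  - rewrite !mact_inB; auto.
  - rewrite !(mact_vanishes g _ X h). ring.
Qed.

Lemma keisler_bound mu : keisler k G mu -> unit_cube B mu.
Proof. intros [h _] X hX; apply h; auto. Qed.

Lemma keisler_mact g mu : G g -> keisler k G mu -> keisler k G (mact g mu).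
Proof.
  intros Gg [h1 [h2 h3]]. split; [|split].
  - intros X hX. rewrite mact_inB; auto. apply h1, inB_translate; auto.
  - rewrite mact_inB, translate_G by (auto; apply inB_G). auto.
  - intros X Y hX hY hXY. rewrite !mact_inB, translate_or by (auto; apply inB_or; auto).
    apply h3; try (apply inB_translate; auto). intros a [_ a1] [_ a2]. eapply hXY; eauto.
Qed.

Lemma keisler_mix t a b : 0 <= t <= 1 -> keisler k G a -> keisler k G b -> keisler k G (mix t a b).
Proof.
  intros ht [a1 [a2 a3]] [b1 [b2 b3]]. unfold mix. split; [|split].
  - intros X hX. specialize (a1 X hX). specialize (b1 X hX). nra.
  - rewrite a2, b2. ring.
  - intros X Y hX hY hXY. rewrite a3, b3; auto. ring.
Qed.

Lemma continuous_eval X : B X -> coord_continuous B (fun mu : meas => mu X).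
Proof. apply continuous_coord. Qed.

Lemma keisler_closed : closedB (keisler k G).
Proof.
  apply closed_and; [|apply closed_and].
  - apply closed_all; intro X. apply closed_impl; intro hX.
    apply closed_and; apply closed_le; auto using continuous_eval, continuous_const.
  - apply closed_eq; auto using continuous_eval, continuous_const, inB_G.
  - apply closed_all; intro X. apply closed_all; intro Y.
    apply closed_impl; intro hX. apply closed_impl; intro hY. apply closed_impl; intros _.
    apply closed_eq; [apply continuous_eval, inB_or; auto | apply continuous_plus; apply continuous_eval; auto].
Qed.

Lemma closedB_eq_on_B C a b : closedB C -> eq_on_B a b -> C a -> C b.
Proof. intros hC e ca. apply (closed_agree _ _ C a b hC); auto. Qed.

Lemma closedB_mact C g : G g -> closedB C -> closedB (fun mu => C (mact g mu)).
Proof.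
  intros Gg hC.
  apply (closed_ext _ _ _ _ (closed_comap B B (translate g) C (fun X hX => inB_translate g X Gg hX) hC)).
  intro mu. split; apply closedB_eq_on_B; auto; intros X hX; rewrite mact_inB; auto.
Qed.

Lemma exists_keisler : exists mu, keisler k G mu.
Proof.
  exists (fun X : list M -> Prop => if excluded_middle_informative (X one) then 1 else 0).
  split; [|split].
  - intros X hX. destruct (excluded_middle_informative (X one)); lra.
  - destruct (excluded_middle_informative (G one)) as [|n]; [auto | destruct (n G_one)].
  - intros X Y hX hY hXY.
    destruct (excluded_middle_informative (X one)), (excluded_middle_informative (Y one)),
      (excluded_middle_informative (X one \/ Y one)); try tauto; try lra.
    exfalso; eauto.
Qed.

Definition invariant (S : meas -> Prop) := forall g mu, G g -> S mu -> S (mact g mu).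
Definition convex (S : meas -> Prop) := forall t a b, 0 <= t <= 1 -> S a -> S b -> S (mix t a b).

Lemma exists_minimal_convex_flow : exists K,
  (exists mu, K mu) /\ closedB K /\ invariant K /\ convex K /\
  (forall mu, K mu -> keisler k G mu) /\
  forall S, (exists mu, S mu) -> closedB S -> invariant S /\ convex S ->
    (forall mu, S mu -> K mu) -> forall mu, K mu -> S mu.
Proof.
  destruct (exists_minimal_closed _ B (keisler k G) (fun S => invariant S /\ convex S))
    as [K [K_ne [K_closed [[K_inv K_cvx] [K_sub K_min]]]]].
  - apply keisler_closed.
  - apply exists_keisler.
  - apply keisler_bound.
  - intros F HF. split.
    + intros g mu Gg [h1 h2]. split; [apply keisler_mact; auto|].
      intros S FS. apply (proj1 (HF S FS)), h2; auto.
    + intros t a b ht [a1 a2] [b1 b2]. split; [apply keisler_mix; auto|].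
      intros S FS. apply (proj2 (HF S FS)); [auto | apply a2 | apply b2]; auto.
  - exists K. do 5 (split; [auto|]). exact K_min.
Qed.

Lemma sup_attained (F : meas -> Prop) X :
  closedB F -> (exists p, F p) -> (forall p, F p -> keisler k G p) -> B X ->
  exists s, (forall p, F p -> p X <= s) /\ exists p, F p /\ p X = s.
Proof.
  intros F_closed [p0 Fp0] F_keisler hX.
  destruct (completeness (fun r => exists p, F p /\ r = p X)) as [s [ub lub]].
  - exists 1. intros r [p [Fp ->]]. apply (keisler_bound p (F_keisler p Fp) X hX).
  - exists (p0 X); eauto.
  - assert (ub' : forall p, F p -> p X <= s) by (intros p Fp; apply ub; eauto).
    exists s. split; [auto|].
    destruct (directed_closed_inter _ B {d : R | 0 < d} F (fun d p => s - proj1_sig d <= p X))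
      as [p [Fp hp]]; eauto.
    + intros p Fp. apply keisler_bound; auto.
    + intros d. apply closed_le; [apply continuous_const | apply continuous_eval; auto].
    + intros [d1 h1] [d2 h2]. exists (exist _ (Rmin d1 d2) (Rmin_glb_lt _ _ _ h1 h2)). simpl.
      intros p hp. assert (Rmin d1 d2 <= d1) by apply Rmin_l.
      assert (Rmin d1 d2 <= d2) by apply Rmin_r. lra.
    + intros [d hd]. simpl. apply NNPP; intro n. assert (s <= s - d); [|lra].
      apply lub. intros r [p [Fp ->]]. apply Rnot_lt_le. intro hlt. apply n. exists p. split; auto. lra.
    + exists p. split; auto. apply Rle_antisym; auto.
      apply Rnot_lt_le; intro hlt.
      assert (hd : 0 < (s - p X) / 2) by lra. specialize (hp (exist _ _ hd)). simpl in hp. lra.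
Qed.

Section MinimalConvexFlow.
Variable K : meas -> Prop.
Hypothesis K_ne : exists mu, K mu.
Hypothesis K_closed : closedB K.
Hypothesis K_inv : invariant K.
Hypothesis K_cvx : convex K.
Hypothesis K_keisler : forall mu, K mu -> keisler k G mu.
Hypothesis K_min : forall S, (exists mu, S mu) -> closedB S -> invariant S /\ convex S ->
  (forall mu, S mu -> K mu) -> forall mu, K mu -> S mu.

Definition face (S : meas -> Prop) : Prop :=
  forall a b t, 0 < t < 1 -> K a -> K b -> S (mix t a b) -> S a /\ S b.

Definition extreme (e : meas) : Prop := K e /\ vanishes_off_B e /\
  forall a b t, 0 < t < 1 -> K a -> K b -> eq_on_B (mix t a b) e -> eq_on_B a e /\ eq_on_B b e.

(* In a minimal closed face, the face of maximizers of [mu |-> mu X] is everything. *)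
Lemma minimal_face_eq_on_B (Fm : meas -> Prop) :
  (exists mu, Fm mu) -> closedB Fm -> face Fm -> (forall mu, Fm mu -> K mu) ->
  (forall S, (exists mu, S mu) -> closedB S -> face S -> (forall mu, S mu -> Fm mu) ->
     forall mu, Fm mu -> S mu) ->
  forall u v, Fm u -> Fm v -> eq_on_B u v.
Proof.
  intros Fm_ne Fm_closed Fm_face Fm_K Fm_min u v Fu Fv X hX.
  destruct (sup_attained Fm X Fm_closed Fm_ne) as [s [ub [p [Fp hp]]]]; auto.
  assert (top : forall q, Fm q -> s <= q X).
  { apply (Fm_min (fun q => Fm q /\ s <= q X)); [exists p; split; auto; lra | | | tauto].
    - apply closed_and; auto. apply closed_le; [apply continuous_const | apply continuous_eval; auto].
    - intros a b t ht Ka Kb [hm hs].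
      destruct (Fm_face a b t ht Ka Kb hm) as [Fa Fb].
      assert (ua := ub a Fa). assert (ubb := ub b Fb). unfold mix in hs.
      split; split; auto; nra. }
  assert (top_u := top u Fu). assert (top_v := top v Fv). assert (ub_u := ub u Fu). assert (ub_v := ub v Fv).
  lra.
Qed.

Lemma exists_extreme : exists e, extreme e.
Proof.
  destruct (exists_minimal_closed _ B K face) as [Fm [[e0 Fe0] [Fm_closed [Fm_face [Fm_K Fm_min]]]]];
    auto.
  - intros mu Kmu. apply keisler_bound; auto.
  - intros F HF a b t ht Ka Kb [_ hS].
    split; split; auto; intros S FS; destruct (HF S FS a b t ht Ka Kb (hS S FS)); auto.
  - assert (Fe : Fm (restrict_B e0)).
    { apply (closedB_eq_on_B Fm e0); auto. apply eq_on_B_sym, restrict_B_eq. }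
    exists (restrict_B e0). split; [auto|]. split; [apply restrict_B_vanishes|].
    intros a b t ht Ka Kb hm.
    assert (Fmix : Fm (mix t a b)).
    { apply (closedB_eq_on_B Fm (restrict_B e0)); auto. apply eq_on_B_sym; auto. }
    destruct (Fm_face a b t ht Ka Kb Fmix) as [Fa Fb].
    split; apply (minimal_face_eq_on_B Fm); eauto.
Qed.

Definition close_le_on (Xs : list (list M -> Prop)) (r : R) (f g : meas) : Prop :=
  forall X, In X Xs -> Rabs (g X - f X) <= r.

Definition near_combination (n : nat) (z : nat -> meas) (Xs : list (list M -> Prop)) (r : R) (p : meas) :=
  exists (lam : nat -> R) (ks : nat -> meas),
    (forall i, (i < n)%nat -> 0 <= lam i) /\ rsum n lam = 1 /\
    (forall i, (i < n)%nat -> K (ks i) /\ close_le_on Xs r (z i) (ks i)) /\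
    eq_on_B p (fun X => rsum n (fun i => lam i * ks i X)).

(* The coefficient tuples [(lam_i, k_i)] of a [near_combination] are encoded as a single function
   on [nat * option (list M -> Prop)]: [(i, None)] holds [lam_i] and [(i, Some X)] holds [k_i X]. *)
Definition coeff_inB (n : nat) (j : nat * option (list M -> Prop)) : Prop :=
  (fst j < n)%nat /\ match snd j with None => True | Some X => B X end.

Definition coeffs_valid n z Xs r (f : nat * option (list M -> Prop) -> R) : Prop :=
  (forall i, (i < n)%nat -> 0 <= f (i, None)) /\ rsum n (fun i => f (i, None)) = 1 /\
  forall i, (i < n)%nat -> K (fun X => f (i, Some X)) /\ close_le_on Xs r (z i) (fun X => f (i, Some X)).

Definition coeffs_near n (p : meas) X d (f : nat * option (list M -> Prop) -> R) : Prop :=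
  Rabs (rsum n (fun i => f (i, None) * f (i, Some X)) - p X) <= d.

Definition coeffs_of (lam : nat -> R) (ks : nat -> meas) (j : nat * option (list M -> Prop)) : R :=
  match snd j with None => lam (fst j) | Some X => ks (fst j) X end.

Lemma coeffs_valid_closed n z Xs r :
  (forall X, In X Xs -> B X) -> coord_closed (coeff_inB n) (coeffs_valid n z Xs r).
Proof.
  intros hXs. apply closed_and; [|apply closed_and].
  - apply closed_all. intro i. apply closed_impl; intro hi.
    apply closed_le; [apply continuous_const | apply continuous_coord; split; simpl; auto].
  - apply closed_eq; [|apply continuous_const]. apply continuous_rsum.
    intros i hi. apply continuous_coord; split; simpl; auto.
  - apply closed_all. intro i. apply closed_impl; intro hi. apply closed_and.
    + apply (closed_comap B _ (fun X => (i, Some X)) K); [intros X hX; split; simpl; auto | auto].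
    + apply closed_all. intro X. apply closed_impl; intro hX. apply closed_le; [|apply continuous_const].
      apply continuous_abs, continuous_minus; [apply continuous_coord; split; simpl; auto | apply continuous_const].
Qed.

Lemma coeffs_valid_cube n z Xs r f : coeffs_valid n z Xs r f -> unit_cube (coeff_inB n) f.
Proof.
  intros [v1 [v2 v3]] [i [X|]] [hi hX]; simpl in hi, hX.
  - exact (keisler_bound _ (K_keisler _ (proj1 (v3 i hi))) X hX).
  - split; [auto|]. rewrite <- v2. apply (rsum_le_elem n (fun i => f (i, None)) i); auto.
Qed.

Lemma coeffs_near_closed n p X d : B X -> coord_closed (coeff_inB n) (coeffs_near n p X d).
Proof.
  intros hX. apply closed_le; [|apply continuous_const].
  apply continuous_abs, continuous_minus; [|apply continuous_const].
  apply continuous_rsum. intros i hi. apply continuous_mult; apply continuous_coord; split; simpl; auto.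
Qed.

(* A point of the closure yields coefficients approximating it on any finite set of coordinates;
   a common limit of these coefficients represents the point exactly. *)
Lemma near_combination_closed n z Xs r :
  (forall X, In X Xs -> B X) -> closedB (near_combination n z Xs r).
Proof.
  intros hXs. apply (closed_ext _ _ _ _ (closure_closed _ B (near_combination n z Xs r))).
  intro p; split; [|apply closure_incl]. intro cp.
  destruct (directed_closed_inter _ (coeff_inB n)
              {Ysd : list (list M -> Prop) * R | (forall X, In X (fst Ysd) -> B X) /\ 0 < snd Ysd}
              (coeffs_valid n z Xs r)
              (fun i f => forall X, In X (fst (proj1_sig i)) -> coeffs_near n p X (snd (proj1_sig i)) f))
    as [phi [[v1 [v2 v3]] hphi]].
  - apply coeffs_valid_closed; auto.
  - apply coeffs_valid_cube.
  - destruct (cp [] 1) as [w [[lam [ks [l1 [l2 [l3 _]]]]] _]]; [intros _ []|lra|].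
    exists (coeffs_of lam ks). split; [auto|]. split; [auto|]. exact l3.
  - intros [[Ys d] [hY hd]]. apply closed_all. intro X. apply closed_impl; intro hX.
    apply coeffs_near_closed, hY; auto.
  - intros [[Ys1 d1] [hY1 hd1]] [[Ys2 d2] [hY2 hd2]]. simpl in *.
    exists (exist _ (Ys1 ++ Ys2, Rmin d1 d2) (conj (admissible_app _ B _ _ hY1 hY2) (Rmin_glb_lt _ _ _ hd1 hd2))).
    simpl. intros f hf. assert (Rmin d1 d2 <= d1) by apply Rmin_l. assert (Rmin d1 d2 <= d2) by apply Rmin_r.
    split; intros X hX; eapply Rle_trans; try apply hf, in_or_app; auto.
  - intros [[Ys d] [hY hd]]. simpl in *.
    destruct (cp Ys d hY hd) as [w [[lam [ks [l1 [l2 [l3 l4]]]]] nw]].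
    exists (coeffs_of lam ks). split; [split; [auto | split; [auto | exact l3]]|].
    intros X hX. unfold coeffs_near, coeffs_of. simpl. rewrite <- (l4 X (hY X hX)). specialize (nw X hX). lra.
  - exists (fun i => phi (i, None)), (fun i X => phi (i, Some X)).
    split; [auto|]. split; [auto|]. split; [auto|].
    intros X hX. apply eq_of_close. intros d hd. rewrite Rabs_minus_sym.
    assert (hX1 : forall Y, In Y [X] -> B Y) by (intros Y [<-|[]]; auto).
    apply (hphi (exist _ ([X], d) (conj hX1 hd))). left; auto.
Qed.

Lemma near_combination_convex n z Xs r : convex (near_combination n z Xs r).
Proof.
  intros t a b ht [l1 [k1 [a1 [a2 [a3 a4]]]]] [l2 [k2 [b1 [b2 [b3 b4]]]]].
  set (lam := fun i => t * l1 i + (1 - t) * l2 i).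
  set (ks := fun i => match Rlt_dec 0 (lam i) with
                      | left _ => mix (t * l1 i / lam i) (k1 i) (k2 i)
                      | right _ => k1 i end).
  exists lam, ks. split; [|split; [|split]].
  - intros i hi. unfold lam. specialize (a1 i hi). specialize (b1 i hi). nra.
  - unfold lam. rewrite rsum_plus, !rsum_scal, a2, b2. ring.
  - intros i hi. unfold ks. destruct (a3 i hi) as [ka na], (b3 i hi) as [kb nb].
    destruct (Rlt_dec 0 (lam i)) as [pos|_]; [|split; auto].
    assert (hc : 0 <= t * l1 i / lam i <= 1).
    { specialize (a1 i hi). specialize (b1 i hi). unfold lam in *. split.
      - apply Rmult_le_pos; [nra | left; apply Rinv_0_lt_compat; auto].
      - apply Rmult_le_reg_r with (t * l1 i + (1 - t) * l2 i); auto. unfold Rdiv.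
        rewrite Rmult_assoc, Rinv_l by lra. nra. }
    split; [apply K_cvx; auto|].
    intros X hX. specialize (na X hX). specialize (nb X hX). unfold mix.
    set (c := t * l1 i / lam i) in *.
    replace (c * k1 i X + (1 - c) * k2 i X - z i X)
      with (c * (k1 i X - z i X) + (1 - c) * (k2 i X - z i X)) by ring.
    eapply Rle_trans; [apply Rabs_triang|].
    rewrite !Rabs_mult, (Rabs_pos_eq c), (Rabs_pos_eq (1 - c)) by lra. nra.
  - intros X hX. unfold mix. rewrite a4, b4 by auto.
    rewrite <- !rsum_scal, <- rsum_plus. apply rsum_ext. intros i hi. unfold ks.
    specialize (a1 i hi). specialize (b1 i hi).
    destruct (Rlt_dec 0 (lam i)) as [pos|npos].
    + unfold mix, lam in *. field. lra.
    + assert (z1 : t * l1 i = 0) by (unfold lam in npos; nra).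
      assert (z2 : (1 - t) * l2 i = 0) by (unfold lam in npos; nra).
      transitivity ((t * l1 i) * k1 i X + ((1 - t) * l2 i) * k2 i X); [ring|].
      unfold lam. rewrite z1, z2. ring.
Qed.

Lemma rsum_S_mix n (lam : nat -> R) (ks : nat -> meas) (q : meas) :
  0 < rsum n lam -> rsum (S n) lam = 1 ->
  eq_on_B q (fun X => rsum n (fun i => / rsum n lam * lam i * ks i X)) ->
  eq_on_B (fun X => rsum (S n) (fun i => lam i * ks i X)) (mix (rsum n lam) q (ks n)).
Proof.
  simpl. intros hr hs hq X hX. unfold mix. rewrite hq by auto.
  replace (1 - rsum n lam) with (lam n) by lra.
  rewrite <- rsum_scal. f_equal. apply rsum_ext. intros i hi. field. lra.
Qed.

Lemma K_rsum n : forall (lam : nat -> R) (ks : nat -> meas),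
  (forall i, (i < n)%nat -> 0 <= lam i) -> rsum n lam = 1 -> (forall i, (i < n)%nat -> K (ks i)) ->
  exists q, K q /\ eq_on_B q (fun X => rsum n (fun i => lam i * ks i X)).
Proof.
  induction n; intros lam ks hl hs hk; simpl in hs; [lra|].
  assert (hr : 0 <= rsum n lam) by (apply rsum_nonneg; intros; apply hl; lia).
  destruct (Rle_lt_or_eq_dec _ _ hr) as [rpos|rz].
  - destruct (IHn (fun i => / rsum n lam * lam i) ks) as [q [Kq hq]].
    + intros i hi. apply Rmult_le_pos; [apply Rlt_le, Rinv_0_lt_compat; auto | apply hl; lia].
    + rewrite rsum_scal. field. lra.
    + intros; apply hk; lia.
    + assert (0 <= lam n) by (apply hl; lia).
      exists (mix (rsum n lam) q (ks n)). split; [apply K_cvx; [lra | auto | apply hk; lia]|].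
      apply eq_on_B_sym, rsum_S_mix; auto.
  - exists (ks n). split; [apply hk; lia|]. intros X hX. simpl.
    rewrite rsum_zero; [replace (lam n) with 1 by lra; ring|].
    intros i hi. assert (lam i <= rsum n lam) by (apply rsum_le_elem; auto; intros; apply hl; lia).
    assert (0 <= lam i) by (apply hl; lia). replace (lam i) with 0 by lra. ring.
Qed.

Section ExtremePoint.
Variable e : meas.
Hypothesis e_extreme : extreme e.

Lemma extreme_rsum n : forall (lam : nat -> R) (ks : nat -> meas),
  (forall i, (i < n)%nat -> 0 <= lam i) -> rsum n lam = 1 -> (forall i, (i < n)%nat -> K (ks i)) ->
  eq_on_B e (fun X => rsum n (fun i => lam i * ks i X)) -> exists i, (i < n)%nat /\ eq_on_B (ks i) e.
Proof.
  destruct e_extreme as [_ [_ e_ext]].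
  induction n; intros lam ks hl hs hk he; simpl in hs; [lra|].
  assert (hr : 0 <= rsum n lam) by (apply rsum_nonneg; intros; apply hl; lia).
  assert (hn : 0 <= lam n) by (apply hl; lia).
  destruct (Rle_lt_or_eq_dec _ _ hr) as [rpos|rz].
  - destruct (K_rsum n (fun i => / rsum n lam * lam i) ks) as [q [Kq hq]].
    + intros i hi. apply Rmult_le_pos; [apply Rlt_le, Rinv_0_lt_compat; auto | apply hl; lia].
    + rewrite rsum_scal. field. lra.
    + intros; apply hk; lia.
    + assert (Emix := rsum_S_mix n lam ks q rpos hs hq).
      destruct (Rle_lt_or_eq_dec _ _ hn) as [npos|nz].
      * exists n. split; [lia|]. apply (e_ext q (ks n) (rsum n lam)); [lra | auto | apply hk; lia |].
        intros X hX. rewrite he, Emix; auto.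
      * destruct (IHn (fun i => / rsum n lam * lam i) ks) as [i [hi hki]].
        -- intros i hi. apply Rmult_le_pos; [apply Rlt_le, Rinv_0_lt_compat; auto | apply hl; lia].
        -- rewrite rsum_scal. field. lra.
        -- intros; apply hk; lia.
        -- intros X hX. rewrite he by auto. simpl. rewrite <- nz, Rmult_0_l, Rplus_0_r.
           replace (rsum n lam) with 1 by (simpl in hs; lra).
           apply rsum_ext. intros i hi. field.
        -- exists i. split; [lia | auto].
  - exists n. split; [lia|]. intros X hX. rewrite he by auto. simpl.
    rewrite rsum_zero; [replace (lam n) with 1 by lra; ring|].
    intros i hi. assert (lam i <= rsum n lam) by (apply rsum_le_elem; auto; intros; apply hl; lia).
    assert (0 <= lam i) by (apply hl; lia). replace (lam i) with 0 by lra. ring.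
Qed.

Definition orbit_closure (m : meas) : meas -> Prop :=
  closure _ B (fun q => exists g, G g /\ q = mact g m).

Lemma orbit_closure_K m p : K m -> orbit_closure m p -> K p.
Proof.
  intros Km cp. apply (closure_min _ B (fun q => exists g, G g /\ q = mact g m) K p K_closed); auto.
  intros q [g [Gg ->]]. apply K_inv; auto.
Qed.

Lemma orbit_closure_invariant m : invariant (orbit_closure m).
Proof.
  intros h p Gh cp js d hjs hd.
  destruct (cp (map (translate h) js) d) as [q [[g [Gg ->]] nq]]; auto.
  { intros Y hY. apply in_map_iff in hY. destruct hY as [X [<- hX]]. apply inB_translate; auto. }
  exists (mact h (mact g m)). split.
  - exists (mul h g). split; [apply G_mul | apply mact_mul]; auto.
  - intros X hX. rewrite (mact_inB h (mact g m) X), (mact_inB h p X) by auto.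
    apply (nq (translate h X)), in_map; auto.
Qed.

Lemma orbit_closure_self m : orbit_closure m (restrict_B m).
Proof.
  intros js d hjs hd. exists (mact one m). split; [exists one; split; auto; apply G_one|].
  intros X hX. rewrite mact_inB, translate_one, restrict_B_eq by auto.
  rewrite Rminus_diag, Rabs_R0; auto.
Qed.

Lemma K_in_closed_convex_hull m : K m ->
  forall p, K p -> forall C, closedB C -> convex C -> (forall z, orbit_closure m z -> C z) -> C p.
Proof.
  intros Km.
  apply (K_min (fun p => K p /\ forall C, closedB C -> convex C ->
                            (forall z, orbit_closure m z -> C z) -> C p)).
  - exists (restrict_B m). split.
    + apply (closedB_eq_on_B K m); auto. apply eq_on_B_sym, restrict_B_eq.
    + intros C _ _ hC. apply hC, orbit_closure_self.
  - apply closed_and; [auto|]. apply closed_all. intro C.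
    apply closed_impl; intro hC. apply closed_impl; intros _. apply closed_impl; intros _. exact hC.
  - split.
    + intros g p Gg [Kp hp]. split; [apply K_inv; auto|]. intros C hC hcv hZ.
      apply (hp (fun q => C (mact g q))).
      * apply closedB_mact; auto.
      * intros t a b ht ha hb. rewrite mact_mix by auto. apply hcv; auto.
      * intros z hz. apply hZ, orbit_closure_invariant; auto.
    + intros t a b ht [Ka ha] [Kb hb]. split; [apply K_cvx; auto|].
      intros C hC hcv hZ. apply hcv; auto; [apply ha | apply hb]; auto.
  - tauto.
Qed.

Lemma near_combination_single n z Xs r i0 p : (i0 < n)%nat -> K p -> (forall i, (i < n)%nat -> K (z i)) ->
  close_on Xs r (z i0) p -> near_combination n z Xs r p.
Proof.
  intros hi0 Kp Kz near.
  exists (fun i => if Nat.eqb i i0 then 1 else 0), (fun i => if Nat.eqb i i0 then p else z i).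
  split; [|split; [|split]].
  - intros i hi. destruct (Nat.eqb i i0); lra.
  - exact (rsum_delta n i0 (fun _ => 1) hi0).
  - intros i hi. destruct (Nat.eqb_spec i i0) as [->|ne].
    + split; [auto|]. intros X hX. left. apply near; auto.
    + split; [auto|]. intros X hX. rewrite Rminus_diag, Rabs_R0.
      destruct Xs as [|X0 Xs]; [destruct hX | apply Rlt_le, Rle_lt_trans with (Rabs (p X0 - z i0 X0));
                                 [apply Rabs_pos | apply near; left; auto]].
  - intros X hX. rewrite (rsum_ext _ _ (fun i => if Nat.eqb i i0 then p X else 0)).
    + symmetry. exact (rsum_delta n i0 (fun _ => p X) hi0).
    + intros i hi. destruct (Nat.eqb i i0); ring.
Qed.

Lemma orbit_closure_finite_net m Xs r : K m -> (forall X, In X Xs -> B X) -> 0 < r ->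
  exists n z, (forall i, (i < n)%nat -> orbit_closure m (z i)) /\
    forall p, orbit_closure m p -> exists i, (i < n)%nat /\ close_on Xs r (z i) p.
Proof.
  intros Km hXs hr.
  destruct (closed_cube_compact _ B {z | orbit_closure m z} (orbit_closure m)
              (fun z => close_on Xs r (proj1_sig z))) as [L cover].
  - apply closure_closed.
  - intros p Zp. apply keisler_bound, K_keisler, (orbit_closure_K m); auto.
  - intros z. apply coord_open_close_on; auto.
  - intros p Zp. exists (exist _ p Zp). apply close_on_refl; auto.
  - exists (length L), (fun i => nth i (map (@proj1_sig _ _) L) m). split.
    + intros i hi. assert (hin : In (nth i (map (@proj1_sig _ _) L) m) (map (@proj1_sig _ _) L))
        by (apply nth_In; rewrite length_map; auto).
      apply in_map_iff in hin. destruct hin as [[y Zy] [<- _]]. auto.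
    + intros p Zp. destruct (cover p Zp) as [[y Zy] [hy near]].
      destruct (In_nth (map (@proj1_sig _ _) L) y m) as [i0 [hi0 hzi]];
        [apply in_map_iff; exists (exist _ y Zy); auto|].
      rewrite length_map in hi0. exists i0. split; [auto|]. rewrite hzi. auto.
Qed.

(* The closed convex set of combinations of points near a finite net [z_i] of the orbit closure
   contains it, hence contains [e]; extremality of [e] forces [e] to be near some [z_i]. *)
Lemma extreme_in_orbit_closure m : K m -> orbit_closure m e.
Proof.
  intros Km Xs eps hXs heps. apply NNPP; intro far.
  assert (Z_far : forall p, orbit_closure m p -> ~ close_on Xs eps e p).
  { intros p cp hn. destruct (close_on_open _ _ _ _ _ hn) as [d [hd hd']].
    destruct (cp Xs d hXs hd) as [q [[g [Gg ->]] nq]]. apply far. exists (mact g m). split; eauto. }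
  destruct (orbit_closure_finite_net m Xs (eps/2) Km hXs) as [n [z [Zz net]]]; [lra|].
  assert (Z_near : forall p, orbit_closure m p -> near_combination n z Xs (eps/2) p).
  { intros p Zp. destruct (net p Zp) as [i0 [hi0 near]].
    apply (near_combination_single n z Xs (eps/2) i0); auto.
    - apply (orbit_closure_K m); auto.
    - intros i hi. apply (orbit_closure_K m), Zz; auto. }
  destruct e_extreme as [Ke _].
  destruct (K_in_closed_convex_hull m Km e Ke _ (near_combination_closed n z Xs (eps/2) hXs)
              (near_combination_convex n z Xs (eps/2)) Z_near) as [lam [ks [l1 [l2 [l3 l4]]]]].
  destruct (extreme_rsum n lam ks l1 l2 (fun i hi => proj1 (l3 i hi)) l4) as [i [hi hki]].
  apply (Z_far (z i) (Zz i hi)). intros X hX. destruct (l3 i hi) as [_ nc]. specialize (nc X hX).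
  rewrite hki in nc by auto. rewrite Rabs_minus_sym. lra.
Qed.

Definition pair_coord := (bool * (list M -> Prop))%type.
Definition pair_inB (j : pair_coord) : Prop := B (snd j).
Definition pair_meas (a b : meas) : pair_coord -> R := fun j => if fst j then a (snd j) else b (snd j).
Definition pair_list (js : list (list M -> Prop)) : list pair_coord :=
  map (pair true) js ++ map (pair false) js.

Lemma pair_list_inB js : (forall X, In X js -> B X) -> forall j, In j (pair_list js) -> pair_inB j.
Proof.
  intros hjs j hj. apply in_app_or in hj.
  destruct hj as [hj|hj]; apply in_map_iff in hj; destruct hj as [X [<- hX]]; apply hjs; auto.
Qed.

Lemma close_on_pair_list js d (P : pair_coord -> R) a b :
  close_on (pair_list js) d P (pair_meas a b) ->
  close_on js d (fun X => P (true, X)) a /\ close_on js d (fun X => P (false, X)) b.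
Proof.
  intros h. split; intros X hX.
  - apply (h (true, X)), in_or_app; left; apply in_map; auto.
  - apply (h (false, X)), in_or_app; right; apply in_map; auto.
Qed.

Definition midpoint_pairs (x y : meas) Ys d (P : pair_coord -> R) : Prop :=
  exists g, G g /\ P = pair_meas (mact g x) (mact g y) /\ close_on Ys d e (mix (1/2) (mact g x) (mact g y)).

(* A limit point, in the space of pairs, of [(g x, g y)] along [g] for which the midpoint
   [g ((x + y) / 2)] tends to [e]; such [g] exist by [extreme_in_orbit_closure]. *)
Lemma exists_midpoint_pair_limit x y : K x -> K y ->
  exists P, forall Ys d, (forall X, In X Ys -> B X) -> 0 < d -> closure _ pair_inB (midpoint_pairs x y Ys d) P.
Proof.
  intros Kx Ky.
  destruct (directed_closed_inter _ pair_inB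
              {Ysd : list (list M -> Prop) * R | (forall X, In X (fst Ysd) -> B X) /\ 0 < snd Ysd}
              (unit_cube pair_inB)
              (fun i => closure _ pair_inB (midpoint_pairs x y (fst (proj1_sig i)) (snd (proj1_sig i)))))
    as [P [_ hP]].
  - apply unit_cube_closed.
  - auto.
  - exists (fun _ => 0). intros j _. lra.
  - intro i. apply closure_closed.
  - intros [[Ys1 d1] [hY1 hd1]] [[Ys2 d2] [hY2 hd2]]. simpl in *.
    exists (exist _ (Ys1 ++ Ys2, Rmin d1 d2) (conj (admissible_app _ B _ _ hY1 hY2) (Rmin_glb_lt _ _ _ hd1 hd2))).
    simpl. intros f hf. split; apply (closure_mono _ _ (midpoint_pairs x y (Ys1 ++ Ys2) (Rmin d1 d2))); auto;
      intros q [g [Gg [-> hq]]]; exists g; split; auto; split; auto;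
      destruct (close_on_app _ _ _ _ _ _ _ hq); auto.
  - intros [[Ys d] [hY hd]]. simpl in *.
    assert (Km : K (mix (1/2) x y)) by (apply K_cvx; auto; lra).
    destruct (extreme_in_orbit_closure _ Km Ys d hY hd) as [q [[g [Gg ->]] ng]].
    rewrite mact_mix in ng by auto.
    exists (pair_meas (mact g x) (mact g y)). split.
    + intros [[] X] hX; apply keisler_bound; auto; apply keisler_mact, K_keisler; auto.
    + apply closure_incl. exists g. auto.
  - exists P. intros Ys d hY hd. apply (hP (exist _ (Ys, d) (conj hY hd))).
Qed.

Lemma midpoint_limit x y : K x -> K y ->
  exists a b, K a /\ K b /\ eq_on_B (mix (1/2) a b) e /\
    forall js d, (forall X, In X js -> B X) -> 0 < d ->
      exists g, G g /\ close_on js d a (mact g x) /\ close_on js d b (mact g y).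
Proof.
  intros Kx Ky. destruct (exists_midpoint_pair_limit x y Kx Ky) as [P hP].
  set (a := fun X => P (true, X)). set (b := fun X => P (false, X)).
  assert (approx : forall js d, (forall X, In X js -> B X) -> 0 < d ->
             exists g, G g /\ close_on js d a (mact g x) /\ close_on js d b (mact g y)).
  { intros js d hjs hd.
    destruct (hP [] 1 (fun _ h => False_ind _ h) Rlt_0_1 (pair_list js) d) as [Q [[g [Gg [-> _]]] nq]];
      [apply pair_list_inB; auto | auto |].
    exists g. split; auto. apply close_on_pair_list; auto. }
  exists a, b. split; [|split; [|split]]; auto.
  - apply (orbit_closure_K x); auto. intros js d hjs hd.
    destruct (approx js d hjs hd) as [g [Gg [ha _]]]. exists (mact g x); eauto.
  - apply (orbit_closure_K y); auto. intros js d hjs hd.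
    destruct (approx js d hjs hd) as [g [Gg [_ hb]]]. exists (mact g y); eauto.
  - intros X hX. apply eq_of_close. intros d hd.
    assert (hX1 : forall Y, In Y [X] -> B Y) by (intros Y [<-|[]]; auto).
    destruct (hP [X] (d / 2) hX1 ltac:(lra) (pair_list [X]) (d / 2)) as [Q [[g [Gg [-> ng]]] nq]];
      [apply pair_list_inB; auto | lra |].
    destruct (close_on_pair_list _ _ _ _ _ nq) as [q1 q2].
    specialize (ng X (or_introl eq_refl)). simpl in ng. specialize (q1 X (or_introl eq_refl)).
    specialize (q2 X (or_introl eq_refl)).
    unfold mix, a, b in *. apply Rabs_def2 in ng. apply Rabs_def2 in q1. apply Rabs_def2 in q2.
    apply Rabs_le. lra.
Qed.

Lemma extreme_proximal x y : K x -> K y -> forall Xs eps, (forall X, In X Xs -> B X) -> 0 < eps ->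
  exists g, G g /\ close_on Xs eps e (mact g x) /\ close_on Xs eps e (mact g y).
Proof.
  intros Kx Ky Xs eps hXs heps.
  destruct (midpoint_limit x y Kx Ky) as [a [b [Ka [Kb [hab approx]]]]].
  destruct e_extreme as [_ [_ e_ext]].
  destruct (e_ext a b (1/2) ltac:(lra) Ka Kb hab) as [ae be].
  destruct (approx Xs eps hXs heps) as [g [Gg [ha hb]]].
  exists g. split; auto. split; intros X hX.
  - rewrite <- (ae X (hXs X hX)). apply ha; auto.
  - rewrite <- (be X (hXs X hX)). apply hb; auto.
Qed.

Lemma restrict_B_id mu : vanishes_off_B mu -> restrict_B mu = mu.
Proof. intro h. apply eq_on_B_eq; auto using restrict_B_vanishes, restrict_B_eq. Qed.

Section Subflow.
Variable Y : meas -> Prop.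
Hypothesis Y_closed : closedB Y.
Hypothesis Y_inv : invariant Y.
Hypothesis Y_K : forall mu, Y mu -> K mu.
Hypothesis Y_min : forall S, (exists mu, S mu) -> closedB S -> invariant S ->
  (forall mu, S mu -> Y mu) -> forall mu, Y mu -> S mu.
Hypothesis Y_e : Y e.

Definition point := {mu : meas | Y mu /\ vanishes_off_B mu}.

Lemma point_eq (p q : point) : proj1_sig p = proj1_sig q -> p = q.
Proof. apply eq_sig_hprop. intros; apply proof_irrelevance. Qed.

Lemma Y_restrict_B mu : Y mu -> Y (restrict_B mu).
Proof. intro h. apply (closedB_eq_on_B Y mu); auto. apply eq_on_B_sym, restrict_B_eq. Qed.

Definition to_point (mu : meas) (h : Y mu) : point :=
  exist _ (restrict_B mu) (conj (Y_restrict_B mu h) (restrict_B_vanishes mu)).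

Lemma to_point_val (p : point) h : to_point (proj1_sig p) h = p.
Proof. apply point_eq. apply restrict_B_id, (proj2_sig p). Qed.

Definition point_e : point := exist _ e (conj Y_e (proj1 (proj2 e_extreme))).

Definition pact (g : list M) (p : point) : point :=
  match excluded_middle_informative (G g) with
  | left Gg => exist _ (mact g (proj1_sig p)) (conj (Y_inv g _ Gg (proj1 (proj2_sig p))) (mact_vanishes g _))
  | right _ => p
  end.

Lemma pact_val g p : G g -> proj1_sig (pact g p) = mact g (proj1_sig p).
Proof. intro Gg. unfold pact. destruct (excluded_middle_informative (G g)); [auto | contradiction]. Qed.

Definition point_open (U : point -> Prop) : Prop :=
  forall p, U p -> exists Xs eps, 0 < eps /\ (forall X, In X Xs -> B X) /\
    forall q, close_on Xs eps (proj1_sig p) (proj1_sig q) -> U q.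

Lemma point_open_full : point_open (fun _ => True).
Proof. intros p _. exists nil, 1. split; [lra|]. split; [intros _ []|auto]. Qed.

Lemma point_open_inter U V : point_open U -> point_open V -> point_open (fun x => U x /\ V x).
Proof.
  intros hU hV p [Up Vp].
  destruct (hU p Up) as [Xs1 [d1 [hd1 [hX1 h1]]]], (hV p Vp) as [Xs2 [d2 [hd2 [hX2 h2]]]].
  exists (Xs1 ++ Xs2), (Rmin d1 d2). split; [apply Rmin_glb_lt; auto|].
  split; [apply admissible_app; auto|].
  intros q hq. destruct (close_on_app _ _ _ _ _ _ _ hq). auto.
Qed.

Lemma point_open_union (F : (point -> Prop) -> Prop) :
  (forall U, F U -> point_open U) -> point_open (fun x => exists U, F U /\ U x).
Proof.
  intros hF p [U [FU Up]]. destruct (hF U FU p Up) as [Xs [d [hd [hX h]]]].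
  exists Xs, d. split; auto. split; auto. intros q hq. exists U; auto.
Qed.

Definition point_topology : topology point :=
  @Build_topology point point_open point_open_full point_open_inter point_open_union.

Definition lift (C : point -> Prop) : meas -> Prop := fun mu => Y mu /\ forall h : Y mu, C (to_point mu h).

Lemma lift_closed C : point_open (fun p => ~ C p) -> closedB (lift C).
Proof.
  intros hC mu nmu. destruct (classic (Y mu)) as [Ymu|nYmu].
  - assert (ex : exists h, ~ C (to_point mu h)).
    { apply NNPP; intro n. apply nmu. split; auto. intro h. apply NNPP; intro n2. apply n; eauto. }
    destruct ex as [h nC]. destruct (hC _ nC) as [Xs [d [hd [hXs hh]]]].
    exists Xs, d. split; auto. split; auto. intros nu hnu [Ynu Cnu].
    apply (hh (to_point nu Ynu)); [|apply Cnu].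
    intros X hX. simpl. rewrite !restrict_B_eq by auto. apply hnu; auto.
  - destruct (Y_closed mu nYmu) as [Xs [d [hd [hXs hh]]]]. exists Xs, d. split; auto. split; auto.
    intros nu hnu [Ynu _]. apply (hh nu hnu Ynu).
Qed.

Lemma point_compact : Defs.compact point_topology.
Proof.
  intros F F_open cover.
  destruct (closed_cube_compact _ B {U | F U} Y (fun U mu => ~ lift (fun p => ~ proj1_sig U p) mu))
    as [Us hUs]; auto.
  - intros mu Ymu. apply keisler_bound, K_keisler, Y_K; auto.
  - intros [U FU]. apply lift_closed. intros p hp. apply NNPP in hp. destruct (F_open U FU p hp) as [Xs [d [hd [hX h]]]].
    exists Xs, d. split; [auto | split; [auto|]]. intros q hq nq. apply nq, h; auto.
  - intros mu Ymu. destruct (cover (to_point mu Ymu)) as [U [FU Up]].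
    exists (exist _ U FU). intros [_ h]. apply (h Ymu). auto.
  - exists (map (@proj1_sig _ _) Us). split.
    + intros U hU. apply in_map_iff in hU. destruct hU as [[V FV] [<- _]]. auto.
    + intros p. destruct (hUs (proj1_sig p) (proj1 (proj2_sig p))) as [[U FU] [hU nU]].
      exists U. split; [apply in_map_iff; exists (exist _ U FU); auto|].
      apply NNPP; intro n. apply nU. split; [apply (proj2_sig p)|]. intro h. rewrite to_point_val. auto.
Qed.

Lemma point_hausdorff : hausdorff point_topology.
Proof.
  intros p q ne.
  assert (ex : exists Z, B Z /\ proj1_sig p Z <> proj1_sig q Z).
  { apply NNPP; intro n. apply ne, point_eq, eq_on_B_eq; [apply (proj2_sig p) | apply (proj2_sig q)|].
    intros Z hZ. apply NNPP; intro n2. apply n. eauto. }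
  destruct ex as [Z [hZ nZ]].
  assert (ex : exists d, 0 < d /\ 2 * d = Rabs (proj1_sig p Z - proj1_sig q Z)).
  { exists (Rabs (proj1_sig p Z - proj1_sig q Z) / 2).
    assert (0 < Rabs (proj1_sig p Z - proj1_sig q Z)) by (apply Rabs_pos_lt; lra). split; lra. }
  destruct ex as [d [hd Hd]].
  assert (ball_open : forall p0 : point, point_open (fun r => close_on [Z] d (proj1_sig p0) (proj1_sig r))).
  { intros p0 r hr. destruct (close_on_open _ _ _ _ _ hr) as [d' [hd' h]].
    exists [Z], d'. split; [auto | split; [intros ? [<-|[]]; auto | auto]]. }
  exists (fun r => close_on [Z] d (proj1_sig p) (proj1_sig r)),
         (fun r => close_on [Z] d (proj1_sig q) (proj1_sig r)).
  split; [apply ball_open|]. split; [apply ball_open|].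
  split; [apply close_on_refl; auto|]. split; [apply close_on_refl; auto|].
  intros r h1 h2.
  assert (h1' : Rabs (proj1_sig r Z - proj1_sig p Z) < d) by exact (h1 Z (or_introl eq_refl)).
  assert (h2' : Rabs (proj1_sig r Z - proj1_sig q Z) < d) by exact (h2 Z (or_introl eq_refl)).
  assert (tri : Rabs (proj1_sig p Z - proj1_sig q Z) <=
                Rabs (proj1_sig r Z - proj1_sig p Z) + Rabs (proj1_sig r Z - proj1_sig q Z)).
  { rewrite (Rabs_minus_sym (proj1_sig r Z) (proj1_sig p Z)).
    replace (proj1_sig p Z - proj1_sig q Z)
      with ((proj1_sig p Z - proj1_sig r Z) + (proj1_sig r Z - proj1_sig q Z)) by ring.
    apply Rabs_triang. }
  lra.
Qed.

Lemma pact_continuous g : G g -> continuous point_topology (pact g).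
Proof.
  intros Gg U hU p hp. destruct (hU _ hp) as [Xs [d [hd [hXs h]]]].
  exists (map (translate g) Xs), d. split; auto. split.
  - intros Z hZ. apply in_map_iff in hZ. destruct hZ as [W [<- hW]]. apply inB_translate; auto.
  - intros q hq. apply h. rewrite !pact_val by auto. intros Z hZ. rewrite !mact_inB by auto.
    apply hq, in_map; auto.
Qed.

Lemma point_flow : is_flow G mul one point_topology pact.
Proof.
  split; [exists point_e; auto|]. split; [apply point_compact|]. split; [apply point_hausdorff|].
  split; [apply pact_continuous|]. split.
  - intro p. apply point_eq. rewrite pact_val by apply G_one. apply mact_one, (proj2_sig p).
  - intros g h p Gg Gh. apply point_eq. rewrite !pact_val by (auto; apply G_mul; auto).
    symmetry; apply mact_mul; auto.
Qed.

Lemma to_point_mtrans g p h : G g -> to_point (mtrans G mul g (proj1_sig p)) h = pact g p.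
Proof. intro Gg. apply point_eq. simpl. rewrite pact_val; auto. Qed.

Lemma point_definable : measure_flow_definable k G mul -> definable_flow k G point_topology pact.
Proof.
  intros flow_def p C1 C2 h1 h2 h12.
  destruct (flow_def (proj1_sig p) (K_keisler _ (Y_K _ (proj1 (proj2_sig p))))
              _ _ (lift_closed C1 h1) (lift_closed C2 h2)) as [D [hD hDD]].
  { intros nu _ [Ynu c1] [_ c2]. apply (h12 (to_point nu Ynu)); auto. }
  exists D. split; auto. intros g Gg. destruct (hDD g Gg) as [a b].
  assert (Ym : Y (mtrans G mul g (proj1_sig p))).
  { apply (closedB_eq_on_B Y (mact g (proj1_sig p))); [auto | apply restrict_B_eq |].
    apply Y_inv; auto. apply (proj2_sig p). }
  split; intro c; [apply a | apply b]; split; auto; intro h; rewrite to_point_mtrans; auto.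
Qed.

Lemma point_minimal : minimal_flow G point_topology pact.
Proof.
  intros Y' hY' [y hy] Y'_inv x.
  assert (sub : forall mu, Y mu -> lift Y' mu).
  { apply Y_min; [| apply lift_closed; auto | | intros mu [h _]; auto].
    - exists (proj1_sig y). split; [apply (proj2_sig y)|]. intro h. rewrite to_point_val; auto.
    - intros g mu Gg [Ymu hmu]. split; [apply Y_inv; auto|]. intro h.
      replace (to_point (mact g mu) h) with (pact g (to_point mu Ymu)); [apply Y'_inv; auto|].
      apply point_eq. simpl. rewrite pact_val, restrict_B_id by (auto using mact_vanishes).
      simpl. apply mact_eq_on_B; auto. apply restrict_B_eq. }
  destruct (sub (proj1_sig x) (proj1 (proj2_sig x))) as [_ h].
  rewrite <- (to_point_val x (proj1 (proj2_sig x))). apply h.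
Qed.

Lemma point_proximal : proximal_flow G point_topology pact.
Proof.
  intros x y.
  set (I := ({Xs : list (list M -> Prop) | forall X, In X Xs -> B X} * {eps : R | 0 < eps})%type).
  set (le := fun i j : I => (forall Z, In Z (proj1_sig (fst i)) -> In Z (proj1_sig (fst j))) /\
                            proj1_sig (snd j) <= proj1_sig (snd i)).
  assert (choice : forall i : I, exists g, G g /\
            close_on (proj1_sig (fst i)) (proj1_sig (snd i)) e (mact g (proj1_sig x)) /\
            close_on (proj1_sig (fst i)) (proj1_sig (snd i)) e (mact g (proj1_sig y))).
  { intros [[Xs hXs] [eps heps]]. apply extreme_proximal; auto; apply Y_K; [apply (proj2_sig x) | apply (proj2_sig y)]. }
  set (gs := fun i => proj1_sig (constructive_indefinite_description _ (choice i))).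
  assert (hgs : forall i, G (gs i) /\
            close_on (proj1_sig (fst i)) (proj1_sig (snd i)) e (mact (gs i) (proj1_sig x)) /\
            close_on (proj1_sig (fst i)) (proj1_sig (snd i)) e (mact (gs i) (proj1_sig y))).
  { intro i. unfold gs. destruct (constructive_indefinite_description _ _) as [g hg]. exact hg. }
  assert (converges : forall p : point, (forall i, close_on (proj1_sig (fst i)) (proj1_sig (snd i)) e
                                                        (mact (gs i) (proj1_sig p))) ->
            net_converges point_topology le (fun i => pact (gs i) p) point_e).
  { intros p hp U hU Ue. destruct (hU _ Ue) as [Xs [d [hd [hXs h]]]].
    exists (exist _ Xs hXs, exist _ d hd). intros [[Xi hi] [di hdi]] [hsub hle]. simpl in hsub, hle.
    apply h. rewrite pact_val by apply hgs. intros Z hZ.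
    apply Rlt_le_trans with di; [exact (hp (exist _ Xi hi, exist _ di hdi) Z (hsub Z hZ)) | exact hle]. }
  exists I, le, gs, point_e. split; [|split; [|split]].
  - split; [exists (exist (fun Xs => forall X, In X Xs -> B X) nil (fun _ h => False_ind _ h),
                    exist _ 1 Rlt_0_1); auto|].
    split; [intro i; split; auto; lra|]. split.
    + intros i j l [a1 a2] [b1 b2]. split; auto. lra.
    + intros [[X1 h1] [d1 hd1]] [[X2 h2] [d2 hd2]].
      exists (exist _ (X1 ++ X2) (admissible_app _ B _ _ h1 h2), exist _ (Rmin d1 d2) (Rmin_glb_lt _ _ _ hd1 hd2)).
      unfold le. simpl. split; (split; [intros Z hZ; apply in_or_app; auto | apply Rmin_l || apply Rmin_r]).
  - intro i; apply hgs.
  - apply converges. intro i. apply hgs.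
  - apply converges. intro i. apply hgs.
Qed.

Lemma subflow_fixes_extreme :
  measure_flow_definable k G mul -> def_strongly_amenable k G mul one ->
  forall g X, G g -> B X -> mtrans G mul g e X = e X.
Proof.
  intros flow_def strongly g X Gg hX.
  assert (fixed := strongly _ _ _ point_flow (point_definable flow_def) point_minimal point_proximal
                     (pact g point_e) point_e).
  apply (f_equal (fun p => proj1_sig p X)) in fixed.
  rewrite pact_val, mact_inB in fixed by auto. exact fixed.
Qed.

End Subflow.

Lemma exists_minimal_subflow : exists Y, closedB Y /\ invariant Y /\ (forall mu, Y mu -> K mu) /\
  (forall S, (exists mu, S mu) -> closedB S -> invariant S -> (forall mu, S mu -> Y mu) ->
     forall mu, Y mu -> S mu) /\ Y e.
Proof.
  destruct (exists_minimal_closed _ B K invariant) as [Y [[y Yy] [Y_closed [Y_inv [Y_K Y_min]]]]]; auto.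
  - intros mu Kmu. apply keisler_bound; auto.
  - intros F HF g mu Gg [Kmu hmu]. split; [apply K_inv; auto|]. intros S FS. apply (HF S FS), hmu; auto.
  - exists Y. do 4 (split; [auto|]).
    apply (closure_min _ B (fun q => exists g, G g /\ q = mact g y) Y e Y_closed).
    + intros q [g [Gg ->]]. apply Y_inv; auto.
    + apply extreme_in_orbit_closure; auto.
Qed.

Lemma extreme_invariant : measure_flow_definable k G mul -> def_strongly_amenable k G mul one ->
  forall g X, G g -> B X -> mtrans G mul g e X = e X.
Proof.
  destruct exists_minimal_subflow as [Y [Y_closed [Y_inv [Y_K [Y_min Y_e]]]]].
  exact (subflow_fixes_extreme Y Y_closed Y_inv Y_K Y_min Y_e).
Qed.

End ExtremePoint.
End MinimalConvexFlow.

Theorem definably_amenable_of_strongly_amenable :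
  measure_flow_definable k G mul -> def_strongly_amenable k G mul one -> def_amenable k G mul.
Proof.
  intros flow_def strongly.
  destruct exists_minimal_convex_flow as [K [K_ne [K_closed [K_inv [K_cvx [K_keisler K_min]]]]]].
  destruct (exists_extreme K K_ne K_closed K_keisler) as [e e_extreme].
  exists e. split; [apply K_keisler, e_extreme|].
  exact (extreme_invariant K K_ne K_closed K_inv K_cvx K_keisler K_min e e_extreme flow_def strongly).
Qed.

End KeislerMeasures.

Theorem mainTheorem16 (M : structure) (k : nat) (G : list M -> Prop)
  (mul : list M -> list M -> list M) (inv : list M -> list M) (one : list M) :
  @def_group M k G mul inv one ->
  (forall p, @is_type M k G p -> @definable_type M k G p) ->
  @measure_flow_definable M k G mul ->
  @def_strongly_amenable M k G mul one ->
  @def_amenable M k G mul.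
Proof.
  intros G_group types_definable.
  exact (definably_amenable_of_strongly_amenable M k G mul inv one G_group types_definable).
Qed.
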